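(* In the setting described in the context, with all standing assumptions in force, for every $i\in\{1,\dots,N\}$, $$\lim_{t\to\infty}\big\|\hat{\mathbf x}_{(i,\ell_i^t)}(\mathbf x_{(i,:)}^t)-\tilde{\mathbf x}_{(i,\ell_i^t)}^t\big\|=0 .$$
   Context: Problem. Let $N,B,d\ge1$. A vector $\mathbf x\in\mathbb R^{dB}$ is partitioned into blocks $\mathbf x=(\mathbf x_1,\dots,\mathbf x_B)$ with $\mathbf x_\ell\in\mathbb R^d$, and $\nabla_\ell$ denotes the partial gradient with respect to block $\ell$. Problem (P) is $$\min_{\mathbf x}\ U(\mathbf x)=\sum_{i=1}^Nf_i(\mathbf x)+\sum_{\ell=1}^B r_\ell(\mathbf x_\ell)\quad\text{s.t. }\mathbf x_\ell\in\mathcal K_\ell,\ \ell=1,\dots,B,$$ with $\mathcal K=\mathcal K_1\times\dots\times\mathcal K_B$. Problem assumptions: - each $\mathcal K_\ell\subseteq\mathbb R^d$ is nonempty, closed and convex; - each $f_i:\mathbb R^{dB}\to\mathbb R$ is $C^1$ on an open set containing $\mathcal K$, and $\nabla f_i$ is $L_i$-Lipschitz continuous and bounded on $\mathcal K$; - each $r_\ell:\mathbb R^d\to\mathbb R$ is convex with bounded subgradients on $\mathcal K_\ell$; - $U$ is coercive on $\mathcal K$. Network. $\mathcal G=(\{1,\dots,N\},\mathcal E)$ is a fixed, strongly connected digraph containing all self-loops. The in-neighbor set of $i$ is $\mathcal N_i=\{j:(j,i)\in\mathcal E\}$. Block selection. At each iteration $t\ge0$, agent $i$ picks $\ell_i^t\in\{1,\dots,B\}$.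 For each $i$ there is a finite $T_i>0$ with $\bigcup_{\tau=0}^{T_i-1}\{\ell_i^{t+\tau}\}=\{1,\dots,B\}$ for all $t\ge0$. Define $\mathcal N_{i,\ell}^t=\{j\in\mathcal N_i:\ell_j^t=\ell\}\cup\{i\}$ and $\mathcal E_\ell^t=\{(j,i)\in\mathcal E:j\in\mathcal N_{i,\ell}^t\}$. Weights. For each $\ell$ and $t$, $A_\ell^t=[a_{ij\ell}^t]$ satisfies $a_{ij\ell}^t>\kappa$ if $(j,i)\in\mathcal E_\ell^t$, $a_{ij\ell}^t=0$ otherwise (for a fixed $\kappa>0$), and $\mathbf 1^\top A_\ell^t=\mathbf 1^\top$. Surrogates. For each $i,\ell$, $\tilde f_{i,\ell}:\mathcal K_\ell\times\mathcal K\to\mathbb R$ satisfies: - $\tilde f_{i,\ell}(\cdot;\mathbf x)$ is $C^1$ and $\tau_i$-strongly convex on $\mathcal K_\ell$ uniformly in $\mathbf x\in\mathcal K$, with $\tau_i>0$; - $\nabla\tilde f_{i,\ell}(\mathbf x_\ell;\mathbf x)=\nabla_\ell f_i(\mathbf x)$ for all $\mathbf x\in\mathcal K$, where $\nabla\tilde f_{i,\ell}$ is the gradient in the first argument and $\mathbf x_\ell$ is the $\ell$-th block of $\mathbf x$; - $\nabla\tilde f_{i,\ell}(\mathbf z;\cdot)$ is Lipschitz continuous on $\mathcal K$ uniformly in $\mathbf z\in\mathcal K_\ell$. For $\mathbf w\in\mathcal K$ and $\mathbf g\in\mathbb R^d$ let $$\hat f_{i,\ell}(\mathbf z;\mathbf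 w,\mathbf g)=\tilde f_{i,\ell}(\mathbf z;\mathbf w)+(N\mathbf g-\nabla_\ell f_i(\mathbf w))^\top(\mathbf z-\mathbf w_\ell).$$ Best-response map: for $\mathbf w\in\mathcal K$ define $$\hat{\mathbf x}_{(i,\ell)}(\mathbf w)=\arg\min_{\mathbf z\in\mathcal K_\ell}\ \hat f_{i,\ell}\Big(\mathbf z;\mathbf w,\tfrac1N\sum_{j=1}^N\nabla_\ell f_j(\mathbf w)\Big)+r_\ell(\mathbf z).$$ Step sizes. $0<\gamma^t\le1$, $\gamma^{t+1}\le\gamma^t$, $\sum_t\gamma^t=\infty$, $\sum_t(\gamma^t)^2<\infty$. Algorithm. Agent $i$ holds $\mathbf x_{(i,:)}^t=(\mathbf x_{(i,\ell)}^t)_\ell$, $\mathbf y_{(i,:)}^t=(\mathbf y_{(i,\ell)}^t)_\ell$ in $\mathbb R^{dB}$ and scalars $\phi_{(i,\ell)}^t$. Initialization: $\mathbf x_{(i,:)}^0\in\mathcal K$ arbitrary, $\mathbf y_{(i,:)}^0=\nabla f_i(\mathbf x_{(i,:)}^0)$, $\phi_{(i,\ell)}^0=1$. At iteration $t$, each agent $i$: - computes $\tilde{\mathbf x}_{(i,\ell_i^t)}^t=\arg\min_{\mathbf z\in\mathcal K_{\ell_i^t}}\hat f_{i,\ell_i^t}(\mathbf z;\mathbf x_{(i,:)}^t,\mathbf y_{(i,\ell_i^t)}^t)+r_{\ell_i^t}(\mathbf z)$; - sets $\Delta\mathbf x_{(i,\ell)}^t=\tilde{\mathbf x}_{(i,\ell)}^t-\mathbf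 x_{(i,\ell)}^t$ if $\ell=\ell_i^t$ and $\Delta\mathbf x_{(i,\ell)}^t=\mathbf 0$ otherwise; - for every $\ell$ updates $$\phi_{(i,\ell)}^{t+1}=\sum_{j\in\mathcal N_{i,\ell}^t}a_{ij\ell}^t\phi_{(j,\ell)}^t,\qquad \mathbf x_{(i,\ell)}^{t+1}=\sum_{j\in\mathcal N_{i,\ell}^t}\frac{a_{ij\ell}^t\phi_{(j,\ell)}^t}{\phi_{(i,\ell)}^{t+1}}\big(\mathbf x_{(j,\ell)}^t+\gamma^t\Delta\mathbf x_{(j,\ell)}^t\big),$$ $$\mathbf y_{(i,\ell)}^{t+1}=\sum_{j\in\mathcal N_{i,\ell}^t}\frac{a_{ij\ell}^t}{\phi_{(i,\ell)}^{t+1}}\Big(\phi_{(j,\ell)}^t\mathbf y_{(j,\ell)}^t+\nabla_\ell f_j(\mathbf x_{(j,:)}^{t+1})-\nabla_\ell f_j(\mathbf x_{(j,:)}^t)\Big).$$ *)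

From Stdlib Require Import Reals Lra Arith Relations.
Open Scope R_scope.

Definition Fin (n : nat) := {k : nat | (k < n)%nat}.
Definition fin_eqb {n : nat} (a b : Fin n) : bool := Nat.eqb (proj1_sig a) (proj1_sig b).

Fixpoint nsum (m : nat) (g : nat -> R) : R :=
  match m with O => 0 | S m' => nsum m' g + g m' end.

Definition fsum (n : nat) (f : Fin n -> R) : R :=
  nsum n (fun k => match lt_dec k n with left H => f (exist _ k H) | right _ => 0 end).

Definition Blk (d : nat) := Fin d -> R.
Definition Full (B d : nat) := Fin B -> Blk d.

Definition bzero (d : nat) : Blk d := fun _ => 0.
Definition badd {d} (u v : Blk d) : Blk d := fun k => u k + v k.
Definition bsub {d} (u v : Blk d) : Blk d := fun k => u k - v k.
Definition bscal {d} (c : R) (u : Blk d) : Blk d := fun k => c * u k.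
Definition bdot {d} (u v : Blk d) : R := fsum d (fun k => u k * v k).
Definition bnorm {d} (u : Blk d) : R := sqrt (bdot u u).
Definition bsumv {d} (n : nat) (f : Fin n -> Blk d) : Blk d := fun k => fsum n (fun j => f j k).

Definition fsub {B d} (x y : Full B d) : Full B d := fun l => bsub (x l) (y l).
Definition fdot {B d} (x y : Full B d) : R := fsum B (fun l => bdot (x l) (y l)).
Definition fnorm {B d} (x : Full B d) : R := sqrt (fdot x x).

Definition bOpen {d} (O : Blk d -> Prop) : Prop :=
  forall x, O x -> exists e, 0 < e /\ forall y, bnorm (bsub y x) < e -> O y.
Definition fOpen {B d} (O : Full B d -> Prop) : Prop :=
  forall x, O x -> exists e, 0 < e /\ forall y, fnorm (fsub y x) < e -> O y.
Definition bClosed {d} (S : Blk d -> Prop) : Prop :=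
  bOpen (fun x => ~ S x).
Definition bConvexSet {d} (S : Blk d -> Prop) : Prop :=
  forall u v th, S u -> S v -> 0 <= th <= 1 ->
    S (badd (bscal th u) (bscal (1 - th) v)).
Definition inK {B d} (K : Fin B -> Blk d -> Prop) (x : Full B d) : Prop :=
  forall l, K l (x l).

Definition fGradOn {B d} (O : Full B d -> Prop) (f : Full B d -> R) (g : Full B d -> Full B d) : Prop :=
  forall x, O x -> forall eps, 0 < eps -> exists delta, 0 < delta /\
    forall y, fnorm (fsub y x) < delta ->
      Rabs (f y - f x - fdot (g x) (fsub y x)) <= eps * fnorm (fsub y x).
Definition bGradOn {d} (O : Blk d -> Prop) (f : Blk d -> R) (g : Blk d -> Blk d) : Prop :=
  forall x, O x -> forall eps, 0 < eps -> exists delta, 0 < delta /\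
    forall y, bnorm (bsub y x) < delta ->
      Rabs (f y - f x - bdot (g x) (bsub y x)) <= eps * bnorm (bsub y x).
Definition fContOn {B d} (O : Full B d -> Prop) (g : Full B d -> Full B d) : Prop :=
  forall x, O x -> forall eps, 0 < eps -> exists delta, 0 < delta /\
    forall y, O y -> fnorm (fsub y x) < delta -> fnorm (fsub (g y) (g x)) < eps.
Definition bContOn {d} (O : Blk d -> Prop) (g : Blk d -> Blk d) : Prop :=
  forall x, O x -> forall eps, 0 < eps -> exists delta, 0 < delta /\
    forall y, O y -> bnorm (bsub y x) < delta -> bnorm (bsub (g y) (g x)) < eps.

Definition fC1Around {B d} (S : Full B d -> Prop) (f : Full B d -> R) (g : Full B d -> Full B d) : Prop :=
  exists O, fOpen O /\ (forall x, S x -> O x) /\ fGradOn O f g /\ fContOn O g.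
Definition bC1Around {d} (S : Blk d -> Prop) (f : Blk d -> R) (g : Blk d -> Blk d) : Prop :=
  exists O, bOpen O /\ (forall x, S x -> O x) /\ bGradOn O f g /\ bContOn O g.

Definition bConvexFun {d} (r : Blk d -> R) : Prop :=
  forall u v th, 0 <= th <= 1 ->
    r (badd (bscal th u) (bscal (1 - th) v)) <= th * r u + (1 - th) * r v.
Definition IsSubgrad {d} (r : Blk d -> R) (x g : Blk d) : Prop :=
  forall z, r z >= r x + bdot g (bsub z x).
Definition BoundedSubgradsOn {d} (S : Blk d -> Prop) (r : Blk d -> R) : Prop :=
  exists M, forall x g, S x -> IsSubgrad r x g -> bnorm g <= M.

Definition IsArgmin {d} (S : Blk d -> Prop) (F : Blk d -> R) (z : Blk d) : Prop :=
  S z /\ forall w, S w -> F z <= F w.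

Definition Uobj {N B d} (f : Fin N -> Full B d -> R) (r : Fin B -> Blk d -> R) (x : Full B d) : R :=
  fsum N (fun i => f i x) + fsum B (fun l => r l (x l)).

Definition CoerciveOn {B d} (S : Full B d -> Prop) (U : Full B d -> R) : Prop :=
  forall M, exists rho, forall x, S x -> fnorm x >= rho -> U x >= M.

Definition ProblemAssumptions {N B d : nat}
  (K : Fin B -> Blk d -> Prop) (f : Fin N -> Full B d -> R) (gf : Fin N -> Full B d -> Full B d)
  (L : Fin N -> R) (r : Fin B -> Blk d -> R) : Prop :=
  (forall l, (exists z, K l z) /\ bClosed (K l) /\ bConvexSet (K l)) /\
  (forall i, fC1Around (inK K) (f i) (gf i)
      /\ (forall x y, inK K x -> inK K y -> fnorm (fsub (gf i x) (gf i y)) <= L i * fnorm (fsub x y))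
      /\ (exists M, forall x, inK K x -> fnorm (gf i x) <= M)) /\
  (forall l, bConvexFun (r l) /\ BoundedSubgradsOn (K l) (r l)) /\
  CoerciveOn (inK K) (Uobj f r).

(** * Network: E j i = true means (j,i) is an edge, i.e. j is an in-neighbor of i *)
Definition NetworkAssumptions {N : nat} (E : Fin N -> Fin N -> bool) : Prop :=
  (forall i, E i i = true) /\
  (forall i j, clos_trans (Fin N) (fun a b => E a b = true) i j).

Definition BlockSelection {N B : nat} (ell : nat -> Fin N -> Fin B) : Prop :=
  forall i, exists T : nat, (0 < T)%nat /\
    forall t (l : Fin B), exists tau, (tau < T)%nat /\ ell (t + tau)%nat i = l.

Definition inNil {N B : nat} (E : Fin N -> Fin N -> bool) (ell : nat -> Fin N -> Fin B)
  (t : nat) (i : Fin N) (l : Fin B) (j : Fin N) : bool :=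
  (E j i && fin_eqb (ell t j) l) || fin_eqb j i.

Definition inEl {N B : nat} (E : Fin N -> Fin N -> bool) (ell : nat -> Fin N -> Fin B)
  (t : nat) (l : Fin B) (i j : Fin N) : bool :=
  E j i && inNil E ell t i l j.

(** a t l i j = a_{ij l}^t *)
Definition WeightAssumptions {N B : nat} (E : Fin N -> Fin N -> bool) (ell : nat -> Fin N -> Fin B)
  (kappa : R) (a : nat -> Fin B -> Fin N -> Fin N -> R) : Prop :=
  (forall t l i j, inEl E ell t l i j = true -> a t l i j > kappa) /\
  (forall t l i j, inEl E ell t l i j = false -> a t l i j = 0) /\
  (forall t l j, fsum N (fun i => a t l i j) = 1).

(** * Surrogates: ft i l z x = \tilde f_{i,l}(z; x), gft its gradient in z *)
Definition SurrogateAssumptions {N B d : nat} (K : Fin B -> Blk d -> Prop)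
  (gf : Fin N -> Full B d -> Full B d)
  (ft : Fin N -> Fin B -> Blk d -> Full B d -> R) (gft : Fin N -> Fin B -> Blk d -> Full B d -> Blk d)
  (tau : Fin N -> R) : Prop :=
  (forall i, 0 < tau i) /\
  (forall i l, forall x, inK K x ->
      bC1Around (K l) (fun z => ft i l z x) (fun z => gft i l z x)) /\
  (forall i l, forall x, inK K x -> forall z w, K l z -> K l w ->
      ft i l z x >= ft i l w x + bdot (gft i l w x) (bsub z w) + tau i / 2 * (bnorm (bsub z w)) ^ 2) /\
  (forall i l, forall x, inK K x -> gft i l (x l) x = gf i x l) /\
  (forall i l, exists Lt, forall z, K l z -> forall x y, inK K x -> inK K y ->
      bnorm (bsub (gft i l z x) (gft i l z y)) <= Lt * fnorm (fsub x y)).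

Definition fhat {N B d : nat} (gf : Fin N -> Full B d -> Full B d)
  (ft : Fin N -> Fin B -> Blk d -> Full B d -> R)
  (i : Fin N) (l : Fin B) (z : Blk d) (w : Full B d) (g : Blk d) : R :=
  ft i l z w + bdot (bsub (bscal (INR N) g) (gf i w l)) (bsub z (w l)).

Definition BRobj {N B d : nat} (gf : Fin N -> Full B d -> Full B d)
  (ft : Fin N -> Fin B -> Blk d -> Full B d -> R) (r : Fin B -> Blk d -> R)
  (i : Fin N) (l : Fin B) (w : Full B d) (z : Blk d) : R :=
  fhat gf ft i l z w (bscal (/ INR N) (bsumv N (fun j => gf j w l))) + r l z.

Definition StepSizes (gamma : nat -> R) : Prop :=
  (forall t, 0 < gamma t <= 1) /\
  (forall t, gamma (S t) <= gamma t) /\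
  cv_infty (fun n => sum_f_R0 gamma n) /\
  (exists s, Un_cv (fun n => sum_f_R0 (fun t => gamma t ^ 2) n) s).

Definition DeltaX {N B d : nat} (ell : nat -> Fin N -> Fin B) (x : nat -> Fin N -> Full B d)
  (xt : nat -> Fin N -> Blk d) (t : nat) (j : Fin N) (l : Fin B) : Blk d :=
  if fin_eqb l (ell t j) then bsub (xt t j) (x t j l) else bzero d.

(** * The algorithm: x t i, y t i are x_{(i,:)}^t, y_{(i,:)}^t; phi t i l = phi_{(i,l)}^t;
      xt t i = \tilde x^t_{(i, ell_i^t)} *)
Definition AlgorithmRun {N B d : nat} (K : Fin B -> Blk d -> Prop)
  (gf : Fin N -> Full B d -> Full B d) (r : Fin B -> Blk d -> R)
  (ft : Fin N -> Fin B -> Blk d -> Full B d -> R)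
  (E : Fin N -> Fin N -> bool) (ell : nat -> Fin N -> Fin B)
  (a : nat -> Fin B -> Fin N -> Fin N -> R) (gamma : nat -> R)
  (x y : nat -> Fin N -> Full B d) (phi : nat -> Fin N -> Fin B -> R)
  (xt : nat -> Fin N -> Blk d) : Prop :=
  (forall i, inK K (x 0%nat i)) /\
  (forall i, y 0%nat i = gf i (x 0%nat i)) /\
  (forall i l, phi 0%nat i l = 1) /\
  (forall t i, IsArgmin (K (ell t i))
      (fun z => fhat gf ft i (ell t i) z (x t i) (y t i (ell t i)) + r (ell t i) z) (xt t i)) /\
  (forall t i l, phi (S t) i l =
      fsum N (fun j => if inNil E ell t i l j then a t l i j * phi t j l else 0)) /\
  (forall t i l, x (S t) i l =
      bsumv N (fun j => if inNil E ell t i l j then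
        bscal (a t l i j * phi t j l / phi (S t) i l)
              (badd (x t j l) (bscal (gamma t) (DeltaX ell x xt t j l)))
        else bzero d)) /\
  (forall t i l, y (S t) i l =
      bsumv N (fun j => if inNil E ell t i l j then
        bscal (a t l i j / phi (S t) i l)
              (badd (bscal (phi t j l) (y t j l))
                    (bsub (gf j (x (S t) j) l) (gf j (x t j) l)))
        else bzero d)).

From Stdlib Require Import Reals Lra Lia Arith Relations FunctionalExtensionality.
Open Scope R_scope.

(** The best response computed with the true average gradient and the iterate
    [xt] computed with the local estimate [y] minimize the same [tau_i]-strongly convex
    objective up to its linear term, so they are at most
    [|sum_j grad_l f_j(x_i) - N y_i| / tau_i] apart.  Both [x] and [y] evolve by perturbed
    averaging with the row-stochastic weights [a phi_j / phi_i^+]; since the push-sum masses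
    [phi] stay bounded below, these weights are uniformly positive on every edge that is
    active once per period, so the spread of each coordinate contracts geometrically over a
    fixed window, up to the accumulated perturbations.  For [x] the perturbation is
    [gamma^t] times a step that is bounded (because [y] and the subgradients of [r] are), so
    the [x]'s reach consensus and their increments vanish; by Lipschitz continuity so do the
    gradient increments driving [y], hence the [y]'s reach consensus as well.  As the
    [phi]-weighted sum of the [y]'s always equals [sum_j grad f_j(x_j)], the gradient
    tracking error tends to zero. *)

Lemma Rabs_le_between a b : Rabs a <= b -> - b <= a <= b.
Proof. intros H. pose proof (Rle_abs a). pose proof (Rle_abs (- a)). rewrite Rabs_Ropp in *. lra. Qed.

Lemma nsum_ext m g h : (forall k, (k < m)%nat -> g k = h k) -> nsum m g = nsum m h.
Proof.
  induction m as [|m IH]; intros H; simpl; [reflexivity|].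
  rewrite IH by (intros; apply H; lia). now rewrite H by lia.
Qed.

Lemma nsum_add m g h : nsum m (fun k => g k + h k) = nsum m g + nsum m h.
Proof. induction m as [|m IH]; simpl; [lra|]. rewrite IH; lra. Qed.

Lemma nsum_scal m c g : nsum m (fun k => c * g k) = c * nsum m g.
Proof. induction m as [|m IH]; simpl; [lra|]. rewrite IH; lra. Qed.

Lemma nsum_le m g h : (forall k, (k < m)%nat -> g k <= h k) -> nsum m g <= nsum m h.
Proof.
  induction m as [|m IH]; intros H; simpl; [lra|].
  assert (nsum m g <= nsum m h) by (apply IH; intros; apply H; lia).
  specialize (H m ltac:(lia)). lra.
Qed.

Lemma nsum_const m c : nsum m (fun _ => c) = INR m * c.
Proof. induction m as [|m IH]; simpl; [lra|]. rewrite IH. destruct m; simpl; lra. Qed.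

Lemma nsum_comm m n (F : nat -> nat -> R) :
  nsum m (fun i => nsum n (fun j => F i j)) = nsum n (fun j => nsum m (fun i => F i j)).
Proof.
  induction m as [|m IH]; simpl.
  - induction n; simpl; lra.
  - rewrite IH, <- nsum_add. reflexivity.
Qed.

Lemma nsum_abs m g : Rabs (nsum m g) <= nsum m (fun k => Rabs (g k)).
Proof.
  induction m as [|m IH]; simpl; [rewrite Rabs_R0; lra|].
  eapply Rle_trans; [apply Rabs_triang|]. lra.
Qed.

Lemma nsum_nonneg m g : (forall k, (k < m)%nat -> 0 <= g k) -> 0 <= nsum m g.
Proof.
  intros H. replace 0 with (nsum m (fun _ => 0)) by (rewrite nsum_const; lra).
  now apply nsum_le.
Qed.

Lemma nsum_term_le m g k :
  (forall k, (k < m)%nat -> 0 <= g k) -> (k < m)%nat -> g k <= nsum m g.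
Proof.
  induction m as [|m IH]; intros H Hk; [lia|]. simpl.
  destruct (Nat.eq_dec k m) as [->|Hne].
  - assert (0 <= nsum m g) by (apply nsum_nonneg; intros; apply H; lia). lra.
  - assert (g k <= nsum m g) by (apply IH; [intros; apply H|]; lia).
    specialize (H m ltac:(lia)). lra.
Qed.

Lemma nsum_delta n k c : (k < n)%nat -> nsum n (fun m => if Nat.eqb m k then c else 0) = c.
Proof.
  induction n as [|n IH]; intros Hk; [lia|]. simpl.
  destruct (Nat.eq_dec k n) as [->|Hne].
  - rewrite Nat.eqb_refl, (nsum_ext n _ (fun _ => 0)), nsum_const; [ring|].
    intros m Hm. destruct (Nat.eqb_spec m n); [lia|reflexivity].
  - rewrite IH by lia. destruct (Nat.eqb_spec n k); [lia|ring].
Qed.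

Definition fext {n} (f : Fin n -> R) (k : nat) : R :=
  match lt_dec k n with left H => f (exist _ k H) | right _ => 0 end.

Lemma fin_eq {n} (i j : Fin n) : proj1_sig i = proj1_sig j -> i = j.
Proof. destruct i, j; simpl; intros ->. f_equal. apply le_unique. Qed.

Lemma fin_eqb_true {n} (i j : Fin n) : fin_eqb i j = true -> i = j.
Proof. intros H. apply fin_eq, Nat.eqb_eq, H. Qed.

Lemma fin_eqb_refl {n} (i : Fin n) : fin_eqb i i = true.
Proof. apply Nat.eqb_refl. Qed.

Lemma fext_val {n} (f : Fin n -> R) (i : Fin n) : fext f (proj1_sig i) = f i.
Proof.
  unfold fext. destruct (lt_dec (proj1_sig i) n) as [H|H].
  - f_equal. now apply fin_eq.
  - destruct i; simpl in *; lia.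
Qed.

Lemma fsum_ext n f g : (forall i, f i = g i) -> fsum n f = fsum n g.
Proof. intros H. apply nsum_ext. intros k _. destruct (lt_dec k n); auto. Qed.

Lemma fsum_add n f g : fsum n (fun i => f i + g i) = fsum n f + fsum n g.
Proof. unfold fsum. rewrite <- nsum_add. apply nsum_ext. intros k _. destruct (lt_dec k n); lra. Qed.

Lemma fsum_scal n c f : fsum n (fun i => c * f i) = c * fsum n f.
Proof. unfold fsum. rewrite <- nsum_scal. apply nsum_ext. intros k _. destruct (lt_dec k n); lra. Qed.

Lemma fsum_sub n f g : fsum n (fun i => f i - g i) = fsum n f - fsum n g.
Proof.
  replace (fsum n f - fsum n g) with (fsum n f + (-1) * fsum n g) by ring.
  rewrite <- fsum_scal, <- fsum_add. apply fsum_ext; intros; ring.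
Qed.

Lemma fsum_le n f g : (forall i, f i <= g i) -> fsum n f <= fsum n g.
Proof. intros H. apply nsum_le. intros k _. destruct (lt_dec k n); auto; lra. Qed.

Lemma fsum_nonneg n f : (forall i, 0 <= f i) -> 0 <= fsum n f.
Proof. intros H. apply nsum_nonneg. intros k _. destruct (lt_dec k n); auto; lra. Qed.

Lemma fsum_const n c : fsum n (fun _ => c) = INR n * c.
Proof.
  unfold fsum. rewrite <- nsum_const. apply nsum_ext. intros k Hk.
  destruct (lt_dec k n); [reflexivity|lia].
Qed.

Lemma fsum_abs n f : Rabs (fsum n f) <= fsum n (fun i => Rabs (f i)).
Proof.
  eapply Rle_trans; [apply nsum_abs|]. apply nsum_le. intros k _.
  destruct (lt_dec k n); [lra|]. rewrite Rabs_R0; lra.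
Qed.

Lemma fsum_term_le n f i : (forall i, 0 <= f i) -> f i <= fsum n f.
Proof.
  intros H. rewrite <- fext_val. apply nsum_term_le.
  - intros k _. unfold fext. destruct (lt_dec k n); auto; lra.
  - destruct i; simpl; auto.
Qed.

Lemma fsum_comm n m (F : Fin n -> Fin m -> R) :
  fsum n (fun i => fsum m (fun j => F i j)) = fsum m (fun j => fsum n (fun i => F i j)).
Proof.
  unfold fsum.
  set (G := fun k k' => match lt_dec k n, lt_dec k' m with
            | left Hk, left Hk' => F (exist _ k Hk) (exist _ k' Hk') | _, _ => 0 end).
  transitivity (nsum n (fun k => nsum m (fun k' => G k k'))).
  { apply nsum_ext. intros k Hk. unfold G. destruct (lt_dec k n); [|lia].
    apply nsum_ext. reflexivity. }
  rewrite nsum_comm. apply nsum_ext. intros k' Hk'. destruct (lt_dec k' m); [|lia].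
  apply nsum_ext. intros k Hk. unfold G. destruct (lt_dec k n); [|lia].
  destruct (lt_dec k' m); [|lia]. repeat f_equal; apply le_unique.
Qed.

Lemma fsum_delta n k c : (k < n)%nat -> fsum n (fun j => if Nat.eqb (proj1_sig j) k then c else 0) = c.
Proof.
  intros Hk. transitivity (nsum n (fun m => if Nat.eqb m k then c else 0)).
  - apply nsum_ext. intros m Hm. destruct (lt_dec m n); [reflexivity|lia].
  - now apply nsum_delta.
Qed.

Lemma fsum_convex_le n (w v : Fin n -> R) c :
  (forall j, 0 <= w j) -> fsum n w = 1 -> (forall j, v j <= c) -> fsum n (fun j => w j * v j) <= c.
Proof.
  intros Hw Hs Hv. replace c with (fsum n (fun j => w j * c)).
  - apply fsum_le; intros; apply Rmult_le_compat_l; auto.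
  - rewrite (fsum_ext n _ (fun j => c * w j)), fsum_scal, Hs by (intros; ring). ring.
Qed.

Lemma fsum_convex_ge n (w v : Fin n -> R) c :
  (forall j, 0 <= w j) -> fsum n w = 1 -> (forall j, c <= v j) -> c <= fsum n (fun j => w j * v j).
Proof.
  intros Hw Hs Hv. replace c with (fsum n (fun j => w j * c)).
  - apply fsum_le; intros; apply Rmult_le_compat_l; auto.
  - rewrite (fsum_ext n _ (fun j => c * w j)), fsum_scal, Hs by (intros; ring). ring.
Qed.

Lemma fsum_convex_le_gap n (w v : Fin n -> R) c i0 dl :
  (forall j, 0 <= w j) -> fsum n w = 1 -> (forall j, v j <= c) -> v i0 <= c - dl ->
  fsum n (fun j => w j * v j) <= c - w i0 * dl.
Proof.
  intros Hw Hs Hv Hi.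
  assert (Hterm : w i0 * (c - v i0) <= fsum n (fun j => w j * (c - v j))).
  { apply (fsum_term_le n (fun j => w j * (c - v j))). intros j.
    apply Rmult_le_pos; auto. specialize (Hv j); lra. }
  assert (Hexp : fsum n (fun j => w j * (c - v j)) = c * fsum n w - fsum n (fun j => w j * v j)).
  { rewrite <- fsum_scal, <- fsum_sub. apply fsum_ext; intros; ring. }
  assert (w i0 * dl <= w i0 * (c - v i0)) by (apply Rmult_le_compat_l; auto; lra).
  rewrite Hs in Hexp. lra.
Qed.

Fixpoint nmax (m : nat) (g : nat -> R) : R :=
  match m with O => g O | S m' => Rmax (nmax m' g) (g m') end.
Fixpoint nmin (m : nat) (g : nat -> R) : R :=
  match m with O => g O | S m' => Rmin (nmin m' g) (g m') end.

Lemma nmax_ge m g k : (k < m)%nat -> g k <= nmax m g.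
Proof.
  induction m as [|m IH]; intros Hk; [lia|]. simpl.
  destruct (Nat.eq_dec k m) as [->|]; [apply Rmax_r|].
  eapply Rle_trans; [apply IH; lia|apply Rmax_l].
Qed.

Lemma nmin_le m g k : (k < m)%nat -> nmin m g <= g k.
Proof.
  induction m as [|m IH]; intros Hk; [lia|]. simpl.
  destruct (Nat.eq_dec k m) as [->|]; [apply Rmin_r|].
  eapply Rle_trans; [apply Rmin_l|apply IH; lia].
Qed.

Lemma nmax_lub m g c : (1 <= m)%nat -> (forall k, (k < m)%nat -> g k <= c) -> nmax m g <= c.
Proof.
  induction m as [|m IH]; intros Hm H; [lia|]. simpl.
  apply Rmax_lub; [|apply H; lia].
  destruct m; [apply H; lia|]. apply IH; [lia|]. intros; apply H; lia.
Qed.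

Lemma nmin_glb m g c : (1 <= m)%nat -> (forall k, (k < m)%nat -> c <= g k) -> c <= nmin m g.
Proof.
  induction m as [|m IH]; intros Hm H; [lia|]. simpl.
  apply Rmin_glb; [|apply H; lia].
  destruct m; [apply H; lia|]. apply IH; [lia|]. intros; apply H; lia.
Qed.

Lemma nmin_attained m g : (1 <= m)%nat -> exists k, (k < m)%nat /\ nmin m g = g k.
Proof.
  induction m as [|m IH]; intros Hm; [lia|]. simpl. destruct m as [|m].
  - exists O. split; [lia|]. unfold Rmin. destruct Rle_dec; auto.
  - destruct (IH ltac:(lia)) as [k [Hk E]]. unfold Rmin. destruct Rle_dec.
    + exists k. split; [lia|auto].
    + exists (S m). split; auto.
Qed.

Definition fmax {n} (f : Fin n -> R) := nmax n (fext f).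
Definition fmin {n} (f : Fin n -> R) := nmin n (fext f).
Definition spread {n} (v : Fin n -> R) := fmax v - fmin v.

Lemma fmax_ge {n} (f : Fin n -> R) i : f i <= fmax f.
Proof. rewrite <- fext_val. apply nmax_ge. destruct i; simpl; auto. Qed.

Lemma fmin_le {n} (f : Fin n -> R) i : fmin f <= f i.
Proof. rewrite <- fext_val. apply nmin_le. destruct i; simpl; auto. Qed.

Lemma fmax_le {n} (f : Fin n -> R) c : (1 <= n)%nat -> (forall i, f i <= c) -> fmax f <= c.
Proof.
  intros Hn H. apply nmax_lub; auto. intros k Hk. unfold fext.
  destruct (lt_dec k n); [apply H|lia].
Qed.

Lemma fmin_ge {n} (f : Fin n -> R) c : (1 <= n)%nat -> (forall i, c <= f i) -> c <= fmin f.
Proof.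
  intros Hn H. apply nmin_glb; auto. intros k Hk. unfold fext.
  destruct (lt_dec k n); [apply H|lia].
Qed.

Lemma fmin_attained {n} (f : Fin n -> R) : (1 <= n)%nat -> exists i, fmin f = f i.
Proof.
  intros Hn. destruct (nmin_attained n (fext f) Hn) as [k [Hk E]].
  exists (exist _ k Hk). unfold fmin. rewrite E, <- (fext_val f (exist _ k Hk)). reflexivity.
Qed.

Lemma spread_diff {n} (v : Fin n -> R) i j : Rabs (v i - v j) <= spread v.
Proof.
  unfold spread. pose proof (fmax_ge v i). pose proof (fmin_le v i).
  pose proof (fmax_ge v j). pose proof (fmin_le v j). apply Rabs_le. lra.
Qed.

Lemma spread_nonneg {n} (v : Fin n -> R) : (1 <= n)%nat -> 0 <= spread v.
Proof.
  intros Hn. pose proof (spread_diff v (exist _ O Hn) (exist _ O Hn)).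
  pose proof (Rabs_pos (v (exist _ O Hn) - v (exist _ O Hn))). lra.
Qed.

Lemma fin_uniform_bound {A} (le : A -> A -> Prop) (join : A -> A -> A) (a0 : A)
  (le_joinl : forall u v, le u (join u v)) (le_joinr : forall u v, le v (join u v))
  n (P : Fin n -> A -> Prop) :
  (forall j u v, P j u -> le u v -> P j v) -> (forall j, exists u, P j u) ->
  exists u, forall j, P j u.
Proof.
  intros Hmono H.
  assert (Hk : forall k, exists u, forall j : Fin n, (proj1_sig j < k)%nat -> P j u).
  { induction k as [|k [u Hu]].
    - exists a0. intros j Hj; lia.
    - destruct (lt_dec k n) as [Hk|Hk].
      + destruct (H (exist _ k Hk)) as [u0 Hu0]. exists (join u u0). intros j Hj.
        destruct (Nat.eq_dec (proj1_sig j) k) as [e|e].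
        * replace j with (exist (fun k => (k < n)%nat) k Hk) by (apply fin_eq; auto).
          eapply Hmono; eauto.
        * eapply Hmono; [apply Hu; lia|apply le_joinl].
      + exists u. intros j Hj. apply Hu. destruct j; simpl in *; lia. }
  destruct (Hk n) as [u Hu]. exists u. intros j. apply Hu. destruct j; simpl; auto.
Qed.

Lemma fin_nat_bound n (P : Fin n -> nat -> Prop) :
  (forall j u v, P j u -> (u <= v)%nat -> P j v) -> (forall j, exists u, P j u) ->
  exists u, forall j, P j u.
Proof. apply (fin_uniform_bound le Nat.max O); lia. Qed.

Lemma fin_real_bound n (P : Fin n -> R -> Prop) :
  (forall j u v, P j u -> u <= v -> P j v) -> (forall j, exists u, P j u) ->
  exists u, forall j, P j u.
Proof. apply (fin_uniform_bound Rle Rmax 0); [apply Rmax_l|apply Rmax_r]. Qed.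

Lemma bdot_comm {d} (u v : Blk d) : bdot u v = bdot v u.
Proof. apply fsum_ext; intros; ring. Qed.

Lemma bdot_self_nonneg {d} (u : Blk d) : 0 <= bdot u u.
Proof. apply fsum_nonneg; intros; nra. Qed.

Lemma bnorm_nonneg {d} (u : Blk d) : 0 <= bnorm u.
Proof. apply sqrt_pos. Qed.

Lemma bnorm_sq {d} (u : Blk d) : bnorm u * bnorm u = bdot u u.
Proof. apply sqrt_sqrt, bdot_self_nonneg. Qed.

Lemma bdot_addl {d} (u v w : Blk d) : bdot (badd u v) w = bdot u w + bdot v w.
Proof. unfold bdot, badd. rewrite <- fsum_add. apply fsum_ext; intros; ring. Qed.

Lemma bdot_subl {d} (u v w : Blk d) : bdot (bsub u v) w = bdot u w - bdot v w.
Proof. unfold bdot, bsub. rewrite <- fsum_sub. apply fsum_ext; intros; ring. Qed.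

Lemma bdot_scall {d} c (u w : Blk d) : bdot (bscal c u) w = c * bdot u w.
Proof. unfold bdot, bscal. rewrite <- fsum_scal. apply fsum_ext; intros; ring. Qed.

Lemma bdot_addr {d} (u v w : Blk d) : bdot w (badd u v) = bdot w u + bdot w v.
Proof. rewrite !(bdot_comm w). apply bdot_addl. Qed.

Lemma bdot_subr {d} (u v w : Blk d) : bdot w (bsub u v) = bdot w u - bdot w v.
Proof. rewrite !(bdot_comm w). apply bdot_subl. Qed.

Lemma bdot_scalr {d} c (u w : Blk d) : bdot w (bscal c u) = c * bdot w u.
Proof. rewrite !(bdot_comm w). apply bdot_scall. Qed.

Lemma bdot_zerol {d} (w : Blk d) : bdot (bzero d) w = 0.
Proof.
  unfold bdot, bzero. rewrite (fsum_ext d _ (fun _ => 0)) by (intros; ring).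
  rewrite fsum_const. ring.
Qed.

Lemma bnorm_sub_comm {d} (u v : Blk d) : bnorm (bsub u v) = bnorm (bsub v u).
Proof. unfold bnorm, bdot, bsub. f_equal. apply fsum_ext; intros; ring. Qed.

Lemma bnorm_scal {d} c (u : Blk d) : bnorm (bscal c u) = Rabs c * bnorm u.
Proof.
  unfold bnorm. rewrite <- sqrt_Rsqr_abs, <- sqrt_mult_alt by apply Rle_0_sqr. f_equal.
  unfold bdot, bscal, Rsqr. rewrite <- fsum_scal. apply fsum_ext; intros; ring.
Qed.

Lemma fsum_mul n m (f : Fin n -> R) (g : Fin m -> R) :
  fsum n f * fsum m g = fsum n (fun j => fsum m (fun k => f j * g k)).
Proof.
  rewrite (Rmult_comm (fsum n f)), <- fsum_scal. apply fsum_ext. intros j.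
  rewrite Rmult_comm, <- fsum_scal. apply fsum_ext; intros; ring.
Qed.

Lemma bdot_cauchy_schwarz_sq {d} (u v : Blk d) : bdot u v * bdot u v <= bdot u u * bdot v v.
Proof.
  (* Lagrange's identity: the gap is half the sum of the squares (u j v k - u k v j)^2. *)
  assert (Hgap : fsum d (fun j => fsum d (fun k => (u j * v k - u k * v j) ^ 2)) =
    2 * (bdot u u * bdot v v - bdot u v * bdot u v)).
  { transitivity (fsum d (fun j => fsum d (fun k => u j * u j * (v k * v k)))
      + fsum d (fun j => fsum d (fun k => u k * u k * (v j * v j)))
      - 2 * fsum d (fun j => fsum d (fun k => u j * v j * (u k * v k)))).
    { rewrite <- fsum_scal, <- fsum_add, <- fsum_sub. apply fsum_ext. intros j.
      rewrite <- fsum_scal, <- fsum_add, <- fsum_sub. apply fsum_ext; intros; ring. }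
    rewrite (fsum_comm d d (fun j k => u k * u k * (v j * v j))).
    unfold bdot. rewrite !fsum_mul. ring. }
  assert (0 <= fsum d (fun j => fsum d (fun k => (u j * v k - u k * v j) ^ 2))).
  { apply fsum_nonneg; intros; apply fsum_nonneg; intros; apply pow2_ge_0. }
  lra.
Qed.

Lemma bdot_cauchy_schwarz {d} (u v : Blk d) : Rabs (bdot u v) <= bnorm u * bnorm v.
Proof.
  unfold bnorm. rewrite <- sqrt_mult, <- sqrt_Rsqr_abs by apply bdot_self_nonneg.
  apply sqrt_le_1; [apply Rle_0_sqr| |apply bdot_cauchy_schwarz_sq].
  apply Rmult_le_pos; apply bdot_self_nonneg.
Qed.

Lemma sqrt_sum_sq_le_sum n (a : Fin n -> R) :
  (forall k, 0 <= a k) -> sqrt (fsum n (fun k => a k * a k)) <= fsum n a.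
Proof.
  intros H. assert (0 <= fsum n a) by (apply fsum_nonneg; auto).
  rewrite <- (sqrt_square (fsum n a)) by auto. apply sqrt_le_1.
  - apply fsum_nonneg; intros; nra.
  - nra.
  - assert (Hsq : fsum n a * fsum n a = fsum n (fun j => a j * fsum n a)).
    { rewrite <- fsum_scal. apply fsum_ext; intros; ring. }
    rewrite Hsq. apply fsum_le. intros j. apply Rmult_le_compat_l; auto. apply fsum_term_le; auto.
Qed.

Lemma Rabs_le_sqrt_sum_sq n (a : Fin n -> R) i : Rabs (a i) <= sqrt (fsum n (fun k => a k * a k)).
Proof.
  rewrite <- sqrt_Rsqr_abs. apply sqrt_le_1.
  - apply Rle_0_sqr.
  - apply fsum_nonneg; intros; nra.
  - apply (fsum_term_le n (fun k => a k * a k)). intros; nra.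
Qed.

Lemma coord_le_bnorm {d} (u : Blk d) k : Rabs (u k) <= bnorm u.
Proof. apply Rabs_le_sqrt_sum_sq. Qed.

Lemma bnorm_le_sum_abs {d} (u : Blk d) : bnorm u <= fsum d (fun k => Rabs (u k)).
Proof.
  eapply Rle_trans; [|apply sqrt_sum_sq_le_sum; intros; apply Rabs_pos].
  right. unfold bnorm, bdot. f_equal. apply fsum_ext. intros k.
  rewrite <- Rabs_mult, Rabs_right; [reflexivity|]. nra.
Qed.

Lemma fnorm_nonneg {B d} (x : Full B d) : 0 <= fnorm x.
Proof. apply sqrt_pos. Qed.

Lemma fnorm_eq_sqrt_sum {B d} (x : Full B d) :
  fnorm x = sqrt (fsum B (fun l => bnorm (x l) * bnorm (x l))).
Proof. unfold fnorm, fdot. f_equal. apply fsum_ext. intros; rewrite bnorm_sq; auto. Qed.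

Lemma bnorm_le_fnorm {B d} (x : Full B d) l : bnorm (x l) <= fnorm x.
Proof.
  rewrite fnorm_eq_sqrt_sum, <- (Rabs_right (bnorm (x l))) by (apply Rle_ge, bnorm_nonneg).
  apply (Rabs_le_sqrt_sum_sq B (fun l => bnorm (x l))).
Qed.

Lemma coord_le_fnorm {B d} (x : Full B d) l k : Rabs (x l k) <= fnorm x.
Proof. eapply Rle_trans; [apply coord_le_bnorm|apply bnorm_le_fnorm]. Qed.

Lemma fnorm_le_sum_abs {B d} (x : Full B d) :
  fnorm x <= fsum B (fun l => fsum d (fun k => Rabs (x l k))).
Proof.
  rewrite fnorm_eq_sqrt_sum. eapply Rle_trans; [apply sqrt_sum_sq_le_sum; intros; apply bnorm_nonneg|].
  apply fsum_le; intros; apply bnorm_le_sum_abs.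
Qed.

Lemma convex_nsum {d} (C : Blk d -> Prop) : bConvexSet C ->
  forall m (W : nat -> R) (Z : nat -> Blk d),
  (forall q, (q < m)%nat -> 0 <= W q) -> (forall q, (q < m)%nat -> C (Z q)) -> 0 < nsum m W ->
  C (fun k => nsum m (fun q => W q * Z q k) / nsum m W).
Proof.
  intros HS. induction m as [|m IH]; intros W Z HW HZ Hpos; simpl in *; [lra|].
  assert (Hs : 0 <= nsum m W) by (apply nsum_nonneg; intros; apply HW; lia).
  assert (Hwm : 0 <= W m) by (apply HW; lia).
  destruct (Req_dec (nsum m W) 0) as [E0|E0].
  - assert (Hz : forall q, (q < m)%nat -> W q = 0).
    { intros q Hq. pose proof (nsum_term_le m W q ltac:(intros; apply HW; lia) Hq).
      specialize (HW q ltac:(lia)). lra. }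
    replace (fun k => _) with (Z m); [apply HZ; lia|].
    apply functional_extensionality; intros k.
    rewrite E0, (nsum_ext m _ (fun _ => 0)), nsum_const by (intros q Hq; rewrite Hz by lia; ring).
    field. lra.
  - set (th := nsum m W / (nsum m W + W m)).
    assert (Hth : 0 <= th <= 1).
    { unfold th. split; [apply Rmult_le_pos; [lra|left; apply Rinv_0_lt_compat; lra]|].
      apply Rmult_le_reg_r with (nsum m W + W m); [lra|].
      unfold Rdiv. rewrite Rmult_assoc, Rinv_l by lra. lra. }
    assert (Hc := HS _ _ th (IH W Z ltac:(intros; apply HW; lia) ltac:(intros; apply HZ; lia) ltac:(lra))
                     (HZ m ltac:(lia)) Hth).
    match goal with |- C ?f => replace f with (badd (bscal th (fun k => nsum m (fun q => W q * Z q k) / nsum m W))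
                                                   (bscal (1 - th) (Z m))); auto end.
    apply functional_extensionality; intros k. unfold badd, bscal, th. field. lra.
Qed.

Lemma convex_fsum {d} (C : Blk d -> Prop) n (w : Fin n -> R) (z : Fin n -> Blk d) :
  bConvexSet C -> (forall j, 0 <= w j) -> fsum n w = 1 -> (forall j, C (z j)) ->
  C (fun k => fsum n (fun j => w j * z j k)).
Proof.
  intros HS Hw Hs Hz. destruct n as [|n]; [unfold fsum in Hs; simpl in Hs; lra|].
  set (j0 := exist (fun k => (k < S n)%nat) O (Nat.lt_0_succ n)).
  set (Z := fun q => match lt_dec q (S n) with left H => z (exist _ q H) | right _ => z j0 end).
  replace (fun k => _) with (fun k => nsum (S n) (fun q => fext w q * Z q k) / nsum (S n) (fext w)).
  - apply convex_nsum; auto.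
    + intros q Hq. unfold fext. destruct lt_dec; auto; lra.
    + intros q Hq. unfold Z. destruct lt_dec; auto.
    + change (0 < fsum (S n) w). lra.
  - apply functional_extensionality; intros k. change (nsum (S n) (fext w)) with (fsum (S n) w).
    rewrite Hs, Rdiv_1_r. apply nsum_ext. intros q Hq. unfold fext, Z. destruct lt_dec; [auto|lia].
Qed.

Lemma Un_cv0_iff u :
  Un_cv u 0 <-> forall eps, eps > 0 -> exists M, forall n, (n >= M)%nat -> Rabs (u n) < eps.
Proof.
  unfold Un_cv, Rdist. split; intros H eps He; destruct (H eps He) as [M HM];
    exists M; intros n Hn; specialize (HM n Hn); rewrite Rminus_0_r in *; auto.
Qed.

Lemma Un_cv0_le a c : (forall n, Rabs (a n) <= c n) -> Un_cv c 0 -> Un_cv a 0.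
Proof.
  rewrite !Un_cv0_iff. intros H Hc eps He. destruct (Hc eps He) as [M HM].
  exists M. intros n Hn. specialize (HM n Hn). specialize (H n). pose proof (Rle_abs (c n)). lra.
Qed.

Lemma Un_cv0_abs a : Un_cv a 0 -> Un_cv (fun n => Rabs (a n)) 0.
Proof.
  rewrite !Un_cv0_iff. intros H eps He. destruct (H eps He) as [M HM].
  exists M. intros n Hn. rewrite Rabs_Rabsolu. auto.
Qed.

Lemma Un_cv0_const : Un_cv (fun _ => 0) 0.
Proof. intros eps He. exists O. intros. unfold Rdist. rewrite Rminus_diag, Rabs_R0. lra. Qed.

Lemma Un_cv0_plus a b : Un_cv a 0 -> Un_cv b 0 -> Un_cv (fun n => a n + b n) 0.
Proof. intros Ha Hb. replace 0 with (0 + 0) by ring. now apply CV_plus. Qed.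

Lemma Un_cv0_scal c a : Un_cv a 0 -> Un_cv (fun n => c * a n) 0.
Proof.
  intros Ha. replace 0 with (c * 0) by ring.
  apply (CV_mult (fun _ => c)); auto. intros eps He. exists O. intros.
  unfold Rdist. rewrite Rminus_diag, Rabs_R0. lra.
Qed.

Lemma Un_cv0_nsum m (F : nat -> nat -> R) :
  (forall k, (k < m)%nat -> Un_cv (F k) 0) -> Un_cv (fun n => nsum m (fun k => F k n)) 0.
Proof.
  induction m as [|m IH]; intros H; simpl; [apply Un_cv0_const|].
  apply Un_cv0_plus; [apply IH; intros|apply H]; auto.
Qed.

Lemma Un_cv0_fsum m (F : Fin m -> nat -> R) :
  (forall k, Un_cv (F k) 0) -> Un_cv (fun n => fsum m (fun k => F k n)) 0.
Proof.
  intros H. apply (Un_cv0_nsum m (fun k n => fext (fun i => F i n) k)). intros k Hk.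
  unfold fext. destruct (lt_dec k m); [apply H|apply Un_cv0_const].
Qed.

Lemma Un_cv0_window_sum a W : Un_cv a 0 -> Un_cv (fun t => nsum W (fun q => a (t + q)%nat)) 0.
Proof.
  intros H. apply (Un_cv0_nsum W (fun q t => a (t + q)%nat)). intros q _.
  rewrite Un_cv0_iff in *. intros eps He. destruct (H eps He) as [M HM].
  exists M. intros n Hn. apply HM. lia.
Qed.

Lemma fnorm_Un_cv0 {B d} (X : nat -> Full B d) :
  (forall l k, Un_cv (fun t => X t l k) 0) -> Un_cv (fun t => fnorm (X t)) 0.
Proof.
  intros H. apply (Un_cv0_le _ (fun t => fsum B (fun l => fsum d (fun k => Rabs (X t l k))))).
  - intros t. rewrite Rabs_right by (apply Rle_ge, fnorm_nonneg). apply fnorm_le_sum_abs.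
  - apply (Un_cv0_fsum B (fun l t => fsum d (fun k => Rabs (X t l k)))). intros l.
    apply (Un_cv0_fsum d (fun k t => Rabs (X t l k))). intros k. apply Un_cv0_abs, H.
Qed.

Lemma Un_cv0_of_sum_sq_cv g :
  (exists s, Un_cv (fun n => sum_f_R0 (fun t => g t ^ 2) n) s) -> Un_cv g 0.
Proof.
  intros [s Hs]. rewrite Un_cv0_iff. intros eps He.
  destruct (Hs (eps * eps / 2)) as [M HM]; [nra|].
  exists (S M). intros n Hn. destruct n as [|n]; [lia|].
  pose proof (HM (S n) ltac:(lia)) as A. pose proof (HM n ltac:(lia)) as B'.
  unfold Rdist in *. change (sum_f_R0 (fun t => g t ^ 2) (S n))
    with (sum_f_R0 (fun t => g t ^ 2) n + g (S n) ^ 2) in A.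
  apply Rabs_def2 in A. apply Rabs_def2 in B'.
  assert (g (S n) * g (S n) < eps * eps) by (replace (g (S n) * g (S n)) with (g (S n) ^ 2) by ring; lra).
  destruct (Rcase_abs (g (S n))); [rewrite Rabs_left by auto|rewrite Rabs_right by auto]; nra.
Qed.

Section WindowRecursion.
Variables (u b : nat -> R) (rho : R) (W : nat).
Hypotheses (Hrho : 0 <= rho < 1) (Hu : forall t, 0 <= u t)
  (Hrec : forall t, u (t + W)%nat <= rho * u t + b t).

Lemma window_iterate t0 beta : 0 <= beta -> (forall t, (t >= t0)%nat -> b t <= beta) ->
  forall n q, u (t0 + q + n * W)%nat <= rho ^ n * u (t0 + q)%nat + beta / (1 - rho).
Proof.
  intros Hb H. induction n as [|n IH]; intros q.
  - simpl. replace (t0 + q + 0)%nat with (t0 + q)%nat by lia.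
    assert (0 <= beta / (1 - rho)) by (apply Rmult_le_pos; [lra|left; apply Rinv_0_lt_compat; lra]). lra.
  - replace (t0 + q + S n * W)%nat with ((t0 + q + n * W) + W)%nat by lia.
    eapply Rle_trans; [apply Hrec|]. specialize (H (t0 + q + n * W)%nat ltac:(lia)). specialize (IH q).
    assert (rho * u (t0 + q + n * W)%nat <= rho * (rho ^ n * u (t0 + q)%nat + beta / (1 - rho)))
      by (apply Rmult_le_compat_l; lra).
    assert (beta / (1 - rho) = rho * (beta / (1 - rho)) + beta) by (field; lra). simpl. lra.
Qed.

Lemma window_bound t0 beta : 0 <= beta -> (forall t, (t >= t0)%nat -> b t <= beta) -> (1 <= W)%nat ->
  forall t, (t >= t0)%nat ->
  u t <= rho ^ ((t - t0) / W) * nsum W (fun q => u (t0 + q)%nat) + beta / (1 - rho).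
Proof.
  intros Hb H HW t Ht.
  set (q := ((t - t0) mod W)%nat). set (n := ((t - t0) / W)%nat).
  assert (Hq : (q < W)%nat) by (apply Nat.mod_upper_bound; lia).
  assert (Et : t = (t0 + q + n * W)%nat).
  { pose proof (Nat.div_mod (t - t0) W ltac:(lia)). unfold q, n. nia. }
  rewrite Et at 1. pose proof (window_iterate t0 beta Hb H n q).
  assert (u (t0 + q)%nat <= nsum W (fun q => u (t0 + q)%nat))
    by (apply (nsum_term_le W (fun q => u (t0 + q)%nat)); auto).
  assert (0 <= rho ^ n) by (apply pow_le; lra).
  assert (rho ^ n * u (t0 + q)%nat <= rho ^ n * nsum W (fun q => u (t0 + q)%nat))
    by (apply Rmult_le_compat_l; auto).
  lra.
Qed.

Lemma window_recursion_bounded beta : 0 <= beta -> (forall t, b t <= beta) -> exists C, forall t, u t <= C.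
Proof.
  intros Hbeta Hb. destruct (Nat.eq_dec W 0) as [EW|EW].
  - exists (beta / (1 - rho)). intros t. specialize (Hrec t). rewrite EW, Nat.add_0_r in Hrec.
    specialize (Hb t). apply Rmult_le_reg_l with (1 - rho); [lra|]. unfold Rdiv. field_simplify; lra.
  - exists (nsum W (fun q => u (0 + q)%nat) + beta / (1 - rho)). intros t.
    pose proof (window_bound O beta Hbeta (fun t _ => Hb t) ltac:(lia) t ltac:(lia)) as Ht.
    set (n := ((t - 0) / W)%nat) in Ht.
    assert (rho ^ n <= 1) by (rewrite <- (pow1 n); apply pow_incr; lra).
    assert (0 <= nsum W (fun q => u (0 + q)%nat)) by (apply nsum_nonneg; auto).
    assert (rho ^ n * nsum W (fun q => u (0 + q)%nat) <= 1 * nsum W (fun q => u (0 + q)%nat))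
      by (apply Rmult_le_compat_r; auto).
    lra.
Qed.

Lemma window_recursion_cv0 : Un_cv b 0 -> Un_cv u 0.
Proof.
  intros Hb. rewrite Un_cv0_iff in *. intros eps He.
  destruct (Hb (eps * (1 - rho) / 2)) as [T0 HT0]; [apply Rmult_gt_0_compat; [apply Rmult_gt_0_compat|]; lra|].
  assert (Hb' : forall t, (t >= T0)%nat -> b t <= eps * (1 - rho) / 2)
    by (intros t Ht; specialize (HT0 t Ht); apply Rabs_def2 in HT0; lra).
  assert (Hbeta : 0 <= eps * (1 - rho) / 2) by (apply Rmult_le_pos; [apply Rmult_le_pos|]; lra).
  destruct (Nat.eq_dec W 0) as [EW|EW].
  - exists T0. intros t Ht. specialize (Hrec t). rewrite EW, Nat.add_0_r in Hrec. specialize (Hb' t Ht).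
    rewrite Rabs_right by (apply Rle_ge; auto).
    assert (u t <= eps / 2) by (apply Rmult_le_reg_r with (1 - rho); lra). lra.
  - set (A := nsum W (fun q => u (T0 + q)%nat)).
    assert (HA : 0 <= A) by (apply nsum_nonneg; auto).
    destruct (pow_lt_1_zero rho ltac:(rewrite Rabs_right; lra) (eps / 2 / (A + 1))) as [n0 Hn0];
      [apply Rdiv_lt_0_compat; lra|].
    exists (T0 + n0 * W)%nat. intros t Ht.
    pose proof (window_bound T0 _ Hbeta Hb' ltac:(lia) t ltac:(lia)) as Hn.
    set (n := ((t - T0) / W)%nat) in Hn.
    assert (Hn1 : (n >= n0)%nat) by (apply Nat.div_le_lower_bound; lia || nia).
    specialize (Hn0 n Hn1). rewrite Rabs_right in Hn0 by (apply Rle_ge, pow_le; lra).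
    assert (rho ^ n * A <= eps / 2 / (A + 1) * A) by (apply Rmult_le_compat_r; lra).
    assert (eps / 2 / (A + 1) * A < eps / 2).
    { unfold Rdiv. apply Rmult_lt_reg_r with (A + 1); [lra|]. field_simplify; nra. }
    replace (eps * (1 - rho) / 2 / (1 - rho)) with (eps / 2) in Hn by (field; lra).
    rewrite Rabs_right by (apply Rle_ge; auto). fold A in Hn. lra.
Qed.
End WindowRecursion.

(** * Consensus under intermittent communication *)

Section Propagation.
Variables (N T : nat) (E : Fin N -> Fin N -> bool) (act : nat -> Fin N -> Fin N -> Prop) (eta : R).
Hypotheses (Hact : forall j i, E j i = true -> forall s, exists k, (k < T)%nat /\ act (s + k)%nat j i)
  (Heta : 0 < eta <= 1).

(** [G i s dl]: at time [s] node [i] holds a margin [dl]; margins persist at a node and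
    cross every active edge, each time shrinking by the factor [eta]. *)
Definition Propagating (G : Fin N -> nat -> R -> Prop) : Prop :=
  (forall i s dl dl', G i s dl -> 0 <= dl' <= dl -> G i s dl') /\
  (forall i s dl, 0 <= dl -> G i s dl -> G i (S s) (eta * dl)) /\
  (forall j i s dl, 0 <= dl -> act s j i -> G j s dl -> G i (S s) (eta * dl)).

Definition Reach (m : nat) (j i : Fin N) : Prop :=
  forall G, Propagating G -> forall s dl, 0 <= dl -> G j s dl -> G i (s + m)%nat (eta ^ m * dl).

Lemma eta_pow_nonneg m dl : 0 <= dl -> 0 <= eta ^ m * dl.
Proof. intros H. apply Rmult_le_pos; auto. apply pow_le; lra. Qed.

Lemma reach_refl m i : Reach m i i.
Proof.
  induction m as [|m IH]; intros G HG s dl Hd Hg.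
  - rewrite Nat.add_0_r, Rmult_1_l. exact Hg.
  - replace (s + S m)%nat with (S (s + m)) by lia. simpl. rewrite Rmult_assoc.
    apply (proj1 (proj2 HG)); [apply eta_pow_nonneg; auto|]. now apply IH.
Qed.

Lemma reach_trans m1 m2 j k i : Reach m1 j k -> Reach m2 k i -> Reach (m1 + m2) j i.
Proof.
  intros H1 H2 G HG s dl Hd Hg.
  pose proof (H2 G HG _ _ (eta_pow_nonneg m1 dl Hd) (H1 G HG s dl Hd Hg)) as H.
  replace (s + (m1 + m2))%nat with (s + m1 + m2)%nat by lia.
  replace (eta ^ (m1 + m2) * dl) with (eta ^ m2 * (eta ^ m1 * dl)) by (rewrite pow_add; ring).
  exact H.
Qed.

Lemma reach_wait m k j i : Reach m j i -> Reach (m + k) j i.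
Proof. intros H. apply (reach_trans m k j i i); auto using reach_refl. Qed.

Lemma reach_edge j i : E j i = true -> Reach T j i.
Proof.
  intros Hji G HG s dl Hd Hg. destruct (Hact j i Hji s) as [k [Hk Ha]].
  pose proof (reach_refl k j G HG s dl Hd Hg) as Hjk.
  pose proof (proj2 (proj2 HG) j i _ _ (eta_pow_nonneg k dl Hd) Ha Hjk) as Hi.
  assert (Hd' : 0 <= eta * (eta ^ k * dl)) by (apply Rmult_le_pos; [lra|apply eta_pow_nonneg; auto]).
  pose proof (reach_refl (T - S k) i G HG _ _ Hd' Hi) as H.
  replace (S (s + k) + (T - S k))%nat with (s + T)%nat in H by lia.
  replace (eta ^ T * dl) with (eta ^ (T - S k) * (eta * (eta ^ k * dl))); auto.
  replace T with ((T - S k) + S k)%nat at 2 by lia. rewrite pow_add. simpl. ring.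
Qed.

Lemma reach_of_path j i : clos_trans _ (fun a b => E a b = true) j i -> exists m, Reach m j i.
Proof.
  induction 1 as [j i Hji|j k i _ [m1 H1] _ [m2 H2]].
  - exists T. now apply reach_edge.
  - exists (m1 + m2)%nat. eapply reach_trans; eauto.
Qed.

Lemma reach_uniform : (forall i j, clos_trans _ (fun a b => E a b = true) i j) ->
  exists W, forall j i, Reach W j i.
Proof.
  intros HE. apply (fin_nat_bound N (fun j W => forall i, Reach W j i)).
  - intros j u v H Huv i. replace v with (u + (v - u))%nat by lia. now apply reach_wait.
  - intros j. apply (fin_nat_bound N (fun i W => Reach W j i)).
    + intros i u v H Huv. replace v with (u + (v - u))%nat by lia. now apply reach_wait.
    + intros i. now apply reach_of_path.
Qed.
End Propagation.

Definition window_sum (pi : nat -> R) (t s : nat) : R := nsum (s - t) (fun q => pi (t + q)%nat).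

Lemma window_sum_S pi t s : (t <= s)%nat -> window_sum pi t (S s) = window_sum pi t s + pi s.
Proof.
  intros H. unfold window_sum. replace (S s - t)%nat with (S (s - t)) by lia.
  simpl. do 2 f_equal. lia.
Qed.

Lemma window_sum_diag pi t : window_sum pi t t = 0.
Proof. unfold window_sum. now rewrite Nat.sub_diag. Qed.

Lemma window_sum_succ pi t : window_sum pi t (S t) = pi t.
Proof. rewrite window_sum_S, window_sum_diag by lia. ring. Qed.

Section PerturbedAveraging.
Variables (N : nat) (w : nat -> Fin N -> Fin N -> R) (v p : nat -> Fin N -> R) (pi : nat -> R).
Hypotheses (HN : (1 <= N)%nat)
  (Hw0 : forall s i j, 0 <= w s i j) (Hw1 : forall s i, fsum N (fun j => w s i j) = 1)
  (Hrec : forall s i, v (S s) i = fsum N (fun j => w s i j * (v s j + p s j)))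
  (Hp : forall s j, Rabs (p s j) <= pi s).

Lemma averaging_upper t : forall s, (t <= s)%nat -> forall i, v s i <= fmax (v t) + window_sum pi t s.
Proof.
  induction s as [|s IH]; intros Hs i.
  - replace t with O by lia. rewrite window_sum_diag, Rplus_0_r. apply fmax_ge.
  - destruct (Nat.eq_dec t (S s)) as [<-|].
    + rewrite window_sum_diag, Rplus_0_r. apply fmax_ge.
    + rewrite window_sum_S, Hrec by lia. apply fsum_convex_le; auto. intros j.
      specialize (IH ltac:(lia) j). specialize (Hp s j). apply Rabs_le_between in Hp. lra.
Qed.

Lemma averaging_lower t : forall s, (t <= s)%nat -> forall i, fmin (v t) - window_sum pi t s <= v s i.
Proof.
  induction s as [|s IH]; intros Hs i.
  - replace t with O by lia. rewrite window_sum_diag, Rminus_0_r. apply fmin_le.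
  - destruct (Nat.eq_dec t (S s)) as [<-|].
    + rewrite window_sum_diag, Rminus_0_r. apply fmin_le.
    + rewrite window_sum_S, Hrec by lia. apply fsum_convex_ge; auto. intros j.
      specialize (IH ltac:(lia) j). specialize (Hp s j). apply Rabs_le_between in Hp. lra.
Qed.

Lemma averaging_step s i : Rabs (v (S s) i - v s i) <= spread (v s) + pi s.
Proof.
  pose proof (averaging_upper s (S s) ltac:(lia) i). pose proof (averaging_lower s (S s) ltac:(lia) i).
  rewrite window_sum_succ in *. pose proof (fmin_le (v s) i). pose proof (fmax_ge (v s) i).
  unfold spread. apply Rabs_le. lra.
Qed.

Variables (T : nat) (E : Fin N -> Fin N -> bool) (act : nat -> Fin N -> Fin N -> Prop) (eta : R).
Hypotheses (HE : forall i j, clos_trans _ (fun a b => E a b = true) i j)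
  (Hact : forall j i, E j i = true -> forall s, exists k, (k < T)%nat /\ act (s + k)%nat j i)
  (Heta : 0 < eta <= 1)
  (Hself : forall s i, eta <= w s i i) (Hedge : forall s j i, act s j i -> eta <= w s i j).

Lemma averaging_margin_propagating t :
  Propagating N act eta (fun i s dl => (t <= s)%nat /\ v s i <= fmax (v t) + window_sum pi t s - dl).
Proof.
  assert (Hgap : forall s i j dl, 0 <= dl -> (t <= s)%nat -> eta <= w s i j ->
            v s j <= fmax (v t) + window_sum pi t s - dl ->
            v (S s) i <= fmax (v t) + window_sum pi t (S s) - eta * dl).
  { intros s i j dl Hd Hs Hw Hj. rewrite window_sum_S, Hrec by auto.
    assert (fsum N (fun j' => w s i j' * (v s j' + p s j'))
            <= (fmax (v t) + window_sum pi t s + pi s) - w s i j * dl).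
    { apply fsum_convex_le_gap; auto.
      - intros j'. pose proof (averaging_upper t s Hs j'). specialize (Hp s j').
        apply Rabs_le_between in Hp. lra.
      - specialize (Hp s j). apply Rabs_le_between in Hp. lra. }
    assert (eta * dl <= w s i j * dl) by (apply Rmult_le_compat_r; auto). lra. }
  split; [|split].
  - intros i s dl dl' [H1 H2] H3. split; auto. lra.
  - intros i s dl Hd [H1 H2]. split; [lia|]. now apply (Hgap s i i dl).
  - intros j i s dl Hd Ha [H1 H2]. split; [lia|]. apply (Hgap s i j dl); auto.
Qed.

Lemma averaging_contraction : exists W, forall t,
  spread (v (t + W)%nat) <= (1 - eta ^ W) * spread (v t) + 2 * nsum W (fun q => pi (t + q)%nat).
Proof.
  destruct (reach_uniform N T E act eta Hact Heta HE) as [W HW]. exists W. intros t.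
  destruct (fmin_attained (v t) HN) as [j0 Hj0].
  set (G := fun i s dl => (t <= s)%nat /\ v s i <= fmax (v t) + window_sum pi t s - dl).
  assert (Hs0 : 0 <= fmax (v t) - fmin (v t)) by (pose proof (fmax_ge (v t) j0); lra).
  assert (Hstart : G j0 t (fmax (v t) - fmin (v t))) by (split; auto; rewrite window_sum_diag; lra).
  assert (Hall : forall i, G i (t + W)%nat (eta ^ W * (fmax (v t) - fmin (v t))))
    by (intros i; apply (HW j0 i G (averaging_margin_propagating t)); auto).
  assert (Hsum : window_sum pi t (t + W) = nsum W (fun q => pi (t + q)%nat))
    by (unfold window_sum; f_equal; lia).
  assert (fmax (v (t + W)%nat) <= fmax (v t) + window_sum pi t (t + W) - eta ^ W * (fmax (v t) - fmin (v t)))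
    by (apply fmax_le; auto; intros i; apply Hall).
  assert (fmin (v t) - window_sum pi t (t + W) <= fmin (v (t + W)%nat))
    by (apply fmin_ge; auto; intros i; apply averaging_lower; lia).
  unfold spread. rewrite Hsum in *. lra.
Qed.

Lemma averaging_spread_cv0 : Un_cv pi 0 -> Un_cv (fun t => spread (v t)) 0.
Proof.
  intros Hpi. destruct averaging_contraction as [W HW].
  apply (window_recursion_cv0 (fun t => spread (v t)) (fun t => 2 * nsum W (fun q => pi (t + q)%nat))
           (1 - eta ^ W) W).
  - pose proof (pow_lt eta W ltac:(lra)). pose proof (pow_incr eta 1 W ltac:(lra)). rewrite pow1 in *. lra.
  - intros; now apply spread_nonneg.
  - exact HW.
  - apply Un_cv0_scal, Un_cv0_window_sum, Hpi.
Qed.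

Lemma averaging_spread_bounded beta : (forall s, pi s <= beta) -> 0 <= beta ->
  exists C, forall t, spread (v t) <= C.
Proof.
  intros Hpi Hb. destruct averaging_contraction as [W HW].
  apply (window_recursion_bounded (fun t => spread (v t)) (fun t => 2 * nsum W (fun q => pi (t + q)%nat))
           (1 - eta ^ W) W) with (beta := 2 * (INR W * beta)).
  - pose proof (pow_lt eta W ltac:(lra)). pose proof (pow_incr eta 1 W ltac:(lra)). rewrite pow1 in *. lra.
  - intros; now apply spread_nonneg.
  - exact HW.
  - pose proof (pos_INR W). nra.
  - intros t. apply Rmult_le_compat_l; [lra|]. rewrite <- nsum_const. apply nsum_le. auto.
Qed.
End PerturbedAveraging.

(** * Subgradients of finite convex functions *)

Section Subgradient.
Variables (d : nat) (r : Blk d -> R) (x : Blk d).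
Hypothesis Hr : bConvexFun r.

Definition incr (v : Blk d) : R := r (badd x v) - r x.

Definition supported_below (k : nat) (v : Blk d) : Prop :=
  forall j : Fin d, (k <= proj1_sig j)%nat -> v j = 0.

Definition unit_blk (k : nat) : Blk d := fun j => if Nat.eqb (proj1_sig j) k then 1 else 0.

Definition Minorant (k : nat) (c : Blk d) : Prop :=
  forall v, supported_below k v -> bdot c v <= incr v.

Lemma incr_convex a b th : 0 <= th <= 1 ->
  incr (badd (bscal th a) (bscal (1 - th) b)) <= th * incr a + (1 - th) * incr b.
Proof.
  intros H. unfold incr.
  replace (badd x (badd (bscal th a) (bscal (1 - th) b)))
    with (badd (bscal th (badd x a)) (bscal (1 - th) (badd x b)))
    by (apply functional_extensionality; intros j; unfold badd, bscal; ring).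
  pose proof (Hr (badd x a) (badd x b) th H). lra.
Qed.

Lemma minorant_slopes_ordered k c u u' s t :
  Minorant k c -> supported_below k u -> supported_below k u' -> 0 < s -> 0 < t ->
  t * (bdot c u' - incr (badd u' (bscal (- s) (unit_blk k))))
  <= s * (incr (badd u (bscal t (unit_blk k))) - bdot c u).
Proof.
  intros Hc Hu Hu' Hs Ht. set (e := unit_blk k). set (th := t / (s + t)).
  assert (Hth : 0 <= th <= 1).
  { unfold th. split; [apply Rmult_le_pos; [lra|left; apply Rinv_0_lt_compat; lra]|].
    apply Rmult_le_reg_r with (s + t); [lra|]. unfold Rdiv. rewrite Rmult_assoc, Rinv_l by lra. lra. }
  (* the combination with weights t/(s+t), s/(s+t) cancels the [e]-components *)
  assert (Hmid : badd (bscal th (badd u' (bscal (- s) e))) (bscal (1 - th) (badd u (bscal t e)))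
                 = badd (bscal th u') (bscal (1 - th) u)).
  { apply functional_extensionality; intros j. unfold badd, bscal, th. field. lra. }
  pose proof (incr_convex (badd u' (bscal (- s) e)) (badd u (bscal t e)) th Hth) as Hconv.
  rewrite Hmid in Hconv.
  assert (Hmin : bdot c (badd (bscal th u') (bscal (1 - th) u)) <= incr (badd (bscal th u') (bscal (1 - th) u))).
  { apply Hc. intros j Hj. unfold badd, bscal. rewrite Hu, Hu' by auto. ring. }
  rewrite bdot_addr, !bdot_scalr in Hmin.
  assert (E1 : th * (s + t) = t) by (unfold th; field; lra).
  assert (E2 : (1 - th) * (s + t) = s) by (unfold th; field; lra).
  fold e. set (X := bdot c u' - incr (badd u' (bscal (- s) e))).
  set (Y := incr (badd u (bscal t e)) - bdot c u).
  assert (H : th * X <= (1 - th) * Y) by (unfold X, Y; lra).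
  replace (t * X) with (th * (s + t) * X) by (rewrite E1; reflexivity).
  replace (s * Y) with ((1 - th) * (s + t) * Y) by (rewrite E2; reflexivity).
  assert (Hst : 0 < s + t) by lra. nra.
Qed.

Lemma minorant_separating_slope k c : Minorant k c ->
  exists al, (forall u s, supported_below k u -> 0 < s ->
                bdot c u - incr (badd u (bscal (- s) (unit_blk k))) <= al * s) /\
             (forall u t, supported_below k u -> 0 < t ->
                al * t <= incr (badd u (bscal t (unit_blk k))) - bdot c u).
Proof.
  intros Hc. set (e := unit_blk k).
  set (A := fun y => exists u s, supported_below k u /\ 0 < s /\
                                 y = (bdot c u - incr (badd u (bscal (- s) e))) / s).
  assert (Hle : forall u u' s t, supported_below k u -> supported_below k u' -> 0 < s -> 0 < t ->
            (bdot c u' - incr (badd u' (bscal (- s) e))) / s <= (incr (badd u (bscal t e)) - bdot c u) / t).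
  { intros u u' s t Hu Hu' Hs Ht. pose proof (minorant_slopes_ordered k c u u' s t Hc Hu Hu' Hs Ht).
    apply Rmult_le_reg_r with (s * t); [nra|]. unfold Rdiv.
    replace ((bdot c u' - incr (badd u' (bscal (- s) e))) * / s * (s * t))
      with (t * (bdot c u' - incr (badd u' (bscal (- s) e)))) by (field; lra).
    replace ((incr (badd u (bscal t e)) - bdot c u) * / t * (s * t))
      with (s * (incr (badd u (bscal t e)) - bdot c u)) by (field; lra).
    exact H. }
  assert (Hzero : supported_below k (bzero d)) by (intros j _; reflexivity).
  destruct (completeness A) as [al [Hub Hlub]].
  - exists ((incr (badd (bzero d) (bscal 1 e)) - bdot c (bzero d)) / 1).
    intros y [u [s [Hu [Hs ->]]]]. apply Hle; auto; lra.
  - exists ((bdot c (bzero d) - incr (badd (bzero d) (bscal (- 1) e))) / 1).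
    exists (bzero d), 1. repeat split; auto; lra.
  - exists al. split.
    + intros u s Hu Hs. assert (Hy : A ((bdot c u - incr (badd u (bscal (- s) e))) / s)) by (exists u, s; auto).
      pose proof (Hub _ Hy) as H. apply Rmult_le_compat_r with (r := s) in H; [|lra].
      unfold Rdiv in H. rewrite Rmult_assoc, Rinv_l, Rmult_1_r in H by lra. exact H.
    + intros u t Hu Ht. assert (H : al <= (incr (badd u (bscal t e)) - bdot c u) / t).
      { apply Hlub. intros y [u' [s [Hu' [Hs ->]]]]. apply Hle; auto. }
      apply Rmult_le_compat_r with (r := t) in H; [|lra].
      unfold Rdiv in H. rewrite Rmult_assoc, Rinv_l, Rmult_1_r in H by lra. exact H.
Qed.

(** One step of finite-dimensional Hahn-Banach: the slope in the new coordinate is chosen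
    between all left and right difference quotients of [incr]. *)
Lemma minorant_extend k c : (k < d)%nat -> Minorant k c ->
  exists c', Minorant (S k) c'.
Proof.
  intros Hk Hc. set (e := unit_blk k).
  destruct (minorant_separating_slope k c Hc) as [al [Hleft Hright]].
  exists (fun j => if Nat.eqb (proj1_sig j) k then al else c j). intros v Hv.
  set (kk := exist (fun m => (m < d)%nat) k Hk). set (t := v kk).
  set (u := fun j => if Nat.eqb (proj1_sig j) k then 0 else v j).
  assert (Hu : supported_below k u).
  { intros j Hj. unfold u. destruct (Nat.eqb_spec (proj1_sig j) k); auto. apply Hv. lia. }
  assert (Ev : v = badd u (bscal t e)).
  { apply functional_extensionality; intros j. unfold badd, bscal, u, e, unit_blk, t.
    destruct (Nat.eqb_spec (proj1_sig j) k) as [Hj|Hj]; [|ring].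
    replace j with kk by (apply fin_eq; auto). ring. }
  assert (Edot : bdot (fun j => if Nat.eqb (proj1_sig j) k then al else c j) v = bdot c u + al * t).
  { rewrite <- (fsum_delta d k (al * t) Hk). unfold bdot. rewrite <- fsum_add. apply fsum_ext. intros j.
    unfold u, t. destruct (Nat.eqb_spec (proj1_sig j) k) as [Hj|Hj]; [|ring].
    replace j with kk by (apply fin_eq; auto). ring. }
  eapply Rle_trans; [right; exact Edot|]. destruct (Rtotal_order t 0) as [Hlt|[Heq|Hgt]].
  - pose proof (Hleft u (- t) Hu ltac:(lra)) as H. fold e in H. rewrite Ropp_involutive, <- Ev in H. nra.
  - rewrite Heq, Rmult_0_r, Rplus_0_r.
    replace v with u by (rewrite Ev; apply functional_extensionality; intros j; unfold badd, bscal; rewrite Heq; ring).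
    now apply Hc.
  - pose proof (Hright u t Hu Hgt) as H. fold e in H. rewrite <- Ev in H. lra.
Qed.

Lemma minorant_exists k : (k <= d)%nat -> exists c, Minorant k c.
Proof.
  induction k as [|k IH]; intros Hk.
  - exists (bzero d). intros v Hv. rewrite bdot_zerol.
    replace v with (bzero d) by (apply functional_extensionality; intros j; symmetry; apply Hv; lia).
    unfold incr. replace (badd x (bzero d)) with x
      by (apply functional_extensionality; intros j; unfold badd, bzero; ring). lra.
  - destruct (IH ltac:(lia)) as [c Hc]. now apply (minorant_extend k c).
Qed.

Lemma subgradient_exists : exists g, IsSubgrad r x g.
Proof.
  destruct (minorant_exists d (le_n d)) as [c Hc]. exists c. intros z.
  pose proof (Hc (bsub z x) ltac:(intros j Hj; destruct j; simpl in *; lia)) as H.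
  unfold incr in H. replace (badd x (bsub z x)) with z in H
    by (apply functional_extensionality; intros j; unfold badd, bsub; ring).
  lra.
Qed.
End Subgradient.

(** * Minimizers of strongly convex objectives *)

Lemma Rle_div_of_sq_le x a b : 0 <= x -> 0 < a -> 0 <= b -> a * (x * x) <= b * x -> x <= b / a.
Proof.
  intros Hx Ha Hb H. destruct (Req_dec x 0) as [->|Hne].
  - apply Rmult_le_pos; [auto|left; apply Rinv_0_lt_compat; auto].
  - apply Rmult_le_reg_l with (a * x); [nra|].
    replace (a * x * (b / a)) with (b * x) by (field; lra). nra.
Qed.

Section StrongConvexArgmin.
Variables (d : nat) (C : Blk d -> Prop) (h : Blk d -> R) (gh : Blk d -> Blk d)
  (r : Blk d -> R) (tau : R).
Hypotheses (HC : bConvexSet C) (Hr : bConvexFun r) (Htau : 0 < tau)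
  (Hh : forall z w, C z -> C w -> h z >= h w + bdot (gh w) (bsub z w) + tau / 2 * bnorm (bsub z w) ^ 2).

Definition lin_obj (c u z : Blk d) : R := h z + bdot c (bsub z u) + r z.

Lemma argmin_growth_along_segment c u zs q th : C zs -> C q -> 0 < th <= 1 ->
  (forall q', C q' -> lin_obj c u zs <= lin_obj c u q') ->
  tau / 2 * (1 - th) * bdot (bsub q zs) (bsub q zs) <= lin_obj c u q - lin_obj c u zs.
Proof.
  intros Hzs Hq Hth Hmin. set (D := bsub q zs). set (zt := badd (bscal th q) (bscal (1 - th) zs)).
  assert (Hzt : C zt) by (apply HC; auto; lra).
  pose proof (Hmin zt Hzt) as H1. unfold lin_obj in *.
  assert (E1 : bsub zs zt = bscal (- th) D)
    by (apply functional_extensionality; intros k; unfold D, zt, bsub, badd, bscal; ring).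
  assert (E2 : bsub q zt = bscal (1 - th) D)
    by (apply functional_extensionality; intros k; unfold D, zt, bsub, badd, bscal; ring).
  pose proof (Hh zs zt Hzs Hzt) as S1. pose proof (Hh q zt Hq Hzt) as S2.
  assert (Hsq : forall v : Blk d, bnorm v ^ 2 = bdot v v) by (intros v; simpl; rewrite Rmult_1_r; apply bnorm_sq).
  rewrite E1, Hsq, bdot_scall, !bdot_scalr in S1. rewrite E2, Hsq, bdot_scall, !bdot_scalr in S2.
  assert (Er : r zt <= th * r q + (1 - th) * r zs) by (apply Hr; lra).
  assert (El : bdot c (bsub zt u) = th * bdot c (bsub q u) + (1 - th) * bdot c (bsub zs u)).
  { replace (bsub zt u) with (badd (bscal th (bsub q u)) (bscal (1 - th) (bsub zs u)))
      by (apply functional_extensionality; intros k; unfold zt, bsub, badd, bscal; ring).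
    rewrite bdot_addr, !bdot_scalr. ring. }
  set (g := gh zt) in *. set (DD := bdot D D) in *.
  assert (Hsc : h zt <= th * h q + (1 - th) * h zs - tau / 2 * th * (1 - th) * DD).
  { assert (A1 : (1 - th) * h zs >= (1 - th) * (h zt + - th * bdot g D + tau / 2 * (- th * (- th * DD))))
      by (apply Rle_ge, Rmult_le_compat_l; lra).
    assert (A2 : th * h q >= th * (h zt + (1 - th) * bdot g D + tau / 2 * ((1 - th) * ((1 - th) * DD))))
      by (apply Rle_ge, Rmult_le_compat_l; lra).
    nra. }
  assert (th * (h q + bdot c (bsub q u) + r q - (h zs + bdot c (bsub zs u) + r zs))
          >= th * (tau / 2 * (1 - th) * DD)) by nra.
  apply Rge_le, Rmult_le_reg_l in H; lra.
Qed.

Lemma argmin_quadratic_growth c u zs q : C zs -> C q ->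
  (forall q', C q' -> lin_obj c u zs <= lin_obj c u q') ->
  tau / 2 * bdot (bsub q zs) (bsub q zs) <= lin_obj c u q - lin_obj c u zs.
Proof.
  intros Hzs Hq Hmin. set (DD := bdot (bsub q zs) (bsub q zs)). set (G := lin_obj c u q - lin_obj c u zs).
  assert (HDD : 0 <= DD) by apply bdot_self_nonneg.
  destruct (Rle_or_lt (tau / 2 * DD) G) as [H|H]; auto. exfalso.
  (* letting th -> 0 in the segment bound contradicts a strict gap *)
  set (gap := tau / 2 * DD - G).
  assert (HP : 0 < tau / 2 * DD).
  { pose proof (argmin_growth_along_segment c u zs q 1 Hzs Hq ltac:(lra) Hmin). fold DD G in H0. lra. }
  set (th := Rmin 1 (gap / (tau * DD))).
  assert (Hth : 0 < th <= 1).
  { unfold th. split; [apply Rmin_glb_lt; [lra|apply Rdiv_lt_0_compat; unfold gap; nra]|apply Rmin_l]. }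
  pose proof (argmin_growth_along_segment c u zs q th Hzs Hq Hth Hmin) as X. fold DD G in X.
  assert (th * (tau * DD) <= gap).
  { pose proof (Rmin_r 1 (gap / (tau * DD))) as Hr'. fold th in Hr'.
    apply Rmult_le_compat_r with (r := tau * DD) in Hr'; [|nra].
    unfold Rdiv in Hr'. rewrite Rmult_assoc, Rinv_l in Hr' by nra. lra. }
  unfold gap in H0. nra.
Qed.

Lemma argmin_lipschitz_in_linear_term c1 c2 u z1 z2 : C z1 -> C z2 ->
  (forall q, C q -> lin_obj c1 u z1 <= lin_obj c1 u q) ->
  (forall q, C q -> lin_obj c2 u z2 <= lin_obj c2 u q) ->
  bnorm (bsub z1 z2) <= bnorm (bsub c1 c2) / tau.
Proof.
  intros H1 H2 M1 M2.
  pose proof (argmin_quadratic_growth c1 u z1 z2 H1 H2 M1) as A.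
  pose proof (argmin_quadratic_growth c2 u z2 z1 H2 H1 M2) as B'. unfold lin_obj in A, B'.
  assert (Elin : bdot c1 (bsub z2 u) - bdot c1 (bsub z1 u) + (bdot c2 (bsub z1 u) - bdot c2 (bsub z2 u))
                 = bdot (bsub c1 c2) (bsub z2 z1)) by (rewrite !bdot_subr, !bdot_subl; ring).
  rewrite <- bnorm_sq in A, B'. rewrite (bnorm_sub_comm z1 z2) in B' |- *.
  pose proof (bdot_cauchy_schwarz (bsub c1 c2) (bsub z2 z1)) as Hcs. apply Rabs_le_between in Hcs.
  apply Rle_div_of_sq_le; [apply bnorm_nonneg|auto|apply bnorm_nonneg|lra].
Qed.

Lemma argmin_near_anchor c u z sg : C z -> C u -> IsSubgrad r u sg ->
  (forall q, C q -> lin_obj c u z <= lin_obj c u q) ->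
  bnorm (bsub z u) <= 2 * (bnorm (badd c (gh u)) + bnorm sg) / tau.
Proof.
  intros Hz Hu Hsg Hmin. pose proof (Hmin u Hu) as Hm. unfold lin_obj in Hm.
  pose proof (Hh z u Hz Hu) as Hs. specialize (Hsg z).
  set (D := bsub z u) in *.
  replace (bsub u u) with (bzero d) in Hm
    by (apply functional_extensionality; intros k; unfold bsub, bzero; ring).
  rewrite (bdot_comm c (bzero d)), bdot_zerol in Hm.
  pose proof (bdot_cauchy_schwarz (badd c (gh u)) D) as Hcs1.
  pose proof (bdot_cauchy_schwarz sg D) as Hcs2.
  apply Rabs_le_between in Hcs1. apply Rabs_le_between in Hcs2. rewrite bdot_addl in Hcs1.
  simpl in Hs. rewrite Rmult_1_r in Hs.
  pose proof (bnorm_nonneg (badd c (gh u))). pose proof (bnorm_nonneg sg).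
  apply Rle_div_of_sq_le; [apply bnorm_nonneg|lra|lra|nra].
Qed.
End StrongConvexArgmin.

Section Algorithm.
Variables (N B d : nat) (K : Fin B -> Blk d -> Prop)
  (gf : Fin N -> Full B d -> Full B d) (L : Fin N -> R) (r : Fin B -> Blk d -> R)
  (E : Fin N -> Fin N -> bool) (ell : nat -> Fin N -> Fin B)
  (kappa : R) (a : nat -> Fin B -> Fin N -> Fin N -> R)
  (ft : Fin N -> Fin B -> Blk d -> Full B d -> R)
  (gft : Fin N -> Fin B -> Blk d -> Full B d -> Blk d) (tau : Fin N -> R)
  (gamma : nat -> R) (x y : nat -> Fin N -> Full B d) (phi : nat -> Fin N -> Fin B -> R)
  (xt : nat -> Fin N -> Blk d).
Hypotheses (HN : (1 <= N)%nat) (Hkappa : 0 < kappa)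
  (Kconv : forall l, bConvexSet (K l))
  (gfL : forall i x y, inK K x -> inK K y -> fnorm (fsub (gf i x) (gf i y)) <= L i * fnorm (fsub x y))
  (gfB : forall i, exists M, forall x, inK K x -> fnorm (gf i x) <= M)
  (rconv : forall l, bConvexFun (r l)) (rsub : forall l, BoundedSubgradsOn (K l) (r l))
  (HEself : forall i, E i i = true)
  (HEconn : forall i j, clos_trans (Fin N) (fun a b => E a b = true) i j)
  (Hell : BlockSelection ell)
  (Ha1 : forall t l i j, inEl E ell t l i j = true -> a t l i j > kappa)
  (Ha2 : forall t l i j, inEl E ell t l i j = false -> a t l i j = 0)
  (Ha3 : forall t l j, fsum N (fun i => a t l i j) = 1)
  (Htau : forall i, 0 < tau i)
  (Hsc : forall i l x, inK K x -> forall z w, K l z -> K l w ->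
      ft i l z x >= ft i l w x + bdot (gft i l w x) (bsub z w) + tau i / 2 * (bnorm (bsub z w)) ^ 2)
  (Hgrad : forall i l x, inK K x -> gft i l (x l) x = gf i x l)
  (Hg1 : forall t, 0 < gamma t <= 1) (Hg0 : Un_cv gamma 0)
  (Hx0 : forall i, inK K (x 0%nat i)) (Hy0 : forall i, y 0%nat i = gf i (x 0%nat i))
  (Hphi0 : forall i l, phi 0%nat i l = 1)
  (Harg : forall t i, IsArgmin (K (ell t i))
      (fun z => fhat gf ft i (ell t i) z (x t i) (y t i (ell t i)) + r (ell t i) z) (xt t i))
  (Hphi : forall t i l, phi (S t) i l =
      fsum N (fun j => if inNil E ell t i l j then a t l i j * phi t j l else 0))
  (Hx : forall t i l, x (S t) i l =
      bsumv N (fun j => if inNil E ell t i l j then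
        bscal (a t l i j * phi t j l / phi (S t) i l)
              (badd (x t j l) (bscal (gamma t) (DeltaX ell x xt t j l)))
        else bzero d))
  (Hy : forall t i l, y (S t) i l =
      bsumv N (fun j => if inNil E ell t i l j then
        bscal (a t l i j / phi (S t) i l)
              (badd (bscal (phi t j l) (y t j l))
                    (bsub (gf j (x (S t) j) l) (gf j (x t j) l)))
        else bzero d)).

Let node0 : Fin N := exist _ O HN.

Lemma weight_nonneg t l i j : 0 <= a t l i j.
Proof.
  destruct (inEl E ell t l i j) eqn:H.
  - specialize (Ha1 _ _ _ _ H). lra.
  - rewrite Ha2 by auto. lra.
Qed.

Lemma inNil_self t i l : inNil E ell t i l i = true.
Proof. unfold inNil. rewrite fin_eqb_refl. apply Bool.orb_true_r. Qed.

Lemma weight_self t l i : a t l i i > kappa.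
Proof. apply Ha1. unfold inEl. now rewrite HEself, inNil_self. Qed.

Lemma weight_if_inNil t l i j c : (if inNil E ell t i l j then a t l i j * c else 0) = a t l i j * c.
Proof.
  destruct (inNil E ell t i l j) eqn:H; auto.
  rewrite Ha2; [ring|]. unfold inEl. rewrite H. apply Bool.andb_false_r.
Qed.

Lemma kappa_lt_1 : kappa < 1.
Proof.
  set (l := ell O node0).
  pose proof (fsum_term_le N (fun i => a O l i node0) node0 (fun i => weight_nonneg O l i node0)).
  pose proof (weight_self O l node0). rewrite Ha3 in *. lra.
Qed.

Lemma phi_rec t i l : phi (S t) i l = fsum N (fun j => a t l i j * phi t j l).
Proof. rewrite Hphi. apply fsum_ext. intros; apply weight_if_inNil. Qed.

Lemma phi_pos : forall t i l, 0 < phi t i l.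
Proof.
  induction t as [|t IH]; intros i l; [rewrite Hphi0; lra|].
  rewrite phi_rec.
  pose proof (fsum_term_le N (fun j => a t l i j * phi t j l) i
                (fun j => Rmult_le_pos _ _ (weight_nonneg t l i j) (Rlt_le _ _ (IH j l)))).
  pose proof (weight_self t l i). pose proof (IH i l). nra.
Qed.

Lemma phi_ge_term t i l j : a t l i j * phi t j l <= phi (S t) i l.
Proof.
  rewrite phi_rec. apply (fsum_term_le N (fun j => a t l i j * phi t j l)). intros j'.
  apply Rmult_le_pos; [apply weight_nonneg|left; apply phi_pos].
Qed.

Lemma phi_sum : forall t l, fsum N (fun i => phi t i l) = INR N.
Proof.
  induction t as [|t IH]; intros l.
  - rewrite (fsum_ext N _ (fun _ => 1)), fsum_const by (intros; apply Hphi0). ring.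
  - rewrite (fsum_ext N _ (fun i => fsum N (fun j => a t l i j * phi t j l))) by (intros; apply phi_rec).
    rewrite fsum_comm, <- (IH l). apply fsum_ext. intros j.
    rewrite (fsum_ext N _ (fun i => phi t j l * a t l i j)), fsum_scal, Ha3 by (intros; ring). ring.
Qed.

Lemma phi_le_N t i l : phi t i l <= INR N.
Proof. rewrite <- (phi_sum t l). apply (fsum_term_le N (fun i => phi t i l)). intros; left; apply phi_pos. Qed.

Lemma uniform_period : exists T, forall j t l, exists k, (k < T)%nat /\ ell (t + k)%nat j = l.
Proof.
  destruct (fin_nat_bound N (fun j T => forall t l, exists k, (k < T)%nat /\ ell (t + k)%nat j = l))
    as [T HT].
  - intros j u v H Huv t l. destruct (H t l) as [k [Hk Hk']]. exists k. split; [lia|auto].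
  - intros j. destruct (Hell j) as [T [_ HT]]. exists T. exact HT.
  - exists T. intros j. apply HT.
Qed.

Definition act (l : Fin B) (s : nat) (j i : Fin N) : Prop := E j i = true /\ ell s j = l.

Lemma act_inEl l s j i : act l s j i -> inEl E ell s l i j = true.
Proof. intros [H1 H2]. unfold inEl, inNil. now rewrite H1, H2, fin_eqb_refl. Qed.

Lemma act_recurrent l : exists T, forall j i, E j i = true ->
  forall s, exists k, (k < T)%nat /\ act l (s + k)%nat j i.
Proof.
  destruct uniform_period as [T HT]. exists T. intros j i Hji s.
  destruct (HT j s l) as [k [Hk Hk']]. exists k. repeat split; auto.
Qed.

Lemma phi_lower_bound l : exists pm, 0 < pm /\ forall t i, pm <= phi t i l.
Proof.
  destruct (act_recurrent l) as [T Hact].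
  assert (Hk1 : 0 < kappa <= 1) by (pose proof kappa_lt_1; lra).
  destruct (reach_uniform N T E (act l) kappa Hact Hk1 HEconn) as [W HW].
  set (G := fun i s dl => dl <= phi s i l).
  assert (HG : Propagating N (act l) kappa G).
  { split; [|split]; unfold G.
    - intros i s dl dl' H1 H2. lra.
    - intros i s dl Hd H1. pose proof (phi_ge_term s i l i). pose proof (weight_self s l i).
      assert (kappa * dl <= a s l i i * phi s i l) by (apply Rmult_le_compat; lra). lra.
    - intros j i s dl Hd Ha H1. pose proof (phi_ge_term s i l j). pose proof (Ha1 _ _ _ _ (act_inEl _ _ _ _ Ha)).
      assert (kappa * dl <= a s l i j * phi s j l) by (apply Rmult_le_compat; lra). lra. }
  assert (HkW : 0 < kappa ^ W) by (apply pow_lt; lra).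
  exists (kappa ^ W). split; auto. intros t i.
  destruct (le_lt_dec W t) as [Hle|Hlt].
  - (* every agent's mass at time t - W reaches i, and these masses sum to N *)
    set (t0 := (t - W)%nat).
    assert (Hj : forall j, kappa ^ W * phi t0 j l <= phi t i l).
    { intros j. pose proof (HW j i G HG t0 (phi t0 j l) (Rlt_le _ _ (phi_pos t0 j l)) (Rle_refl _)) as H.
      unfold G in H. replace (t0 + W)%nat with t in H by (unfold t0; lia). exact H. }
    pose proof (fsum_le N _ _ Hj) as Hs.
    rewrite fsum_scal, phi_sum, fsum_const in Hs. pose proof (lt_0_INR N ltac:(lia)). nra.
  - pose proof (reach_refl N (act l) kappa Hk1 t i G HG O 1 ltac:(lra) ltac:(unfold G; rewrite Hphi0; lra)) as H.
    unfold G in H. simpl in H.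
    assert (kappa ^ W <= kappa ^ t).
    { replace W with (t + (W - t))%nat by lia. rewrite pow_add.
      pose proof (pow_lt kappa t ltac:(lra)). pose proof (pow_incr kappa 1 (W - t) ltac:(lra)).
      rewrite pow1 in *. nra. }
    lra.
Qed.

(** Row-stochastic form of the push-sum updates: both [x] and [y] are averaged with these weights. *)
Definition mix (t : nat) (l : Fin B) (i j : Fin N) : R :=
  if inNil E ell t i l j then a t l i j * phi t j l / phi (S t) i l else 0.

Lemma mix_nonneg t l i j : 0 <= mix t l i j.
Proof.
  unfold mix. destruct inNil; [|lra]. unfold Rdiv.
  pose proof (weight_nonneg t l i j). pose proof (phi_pos t j l).
  pose proof (Rinv_0_lt_compat _ (phi_pos (S t) i l)). apply Rmult_le_pos; [apply Rmult_le_pos|]; lra.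
Qed.

Lemma mix_sum t l i : fsum N (fun j => mix t l i j) = 1.
Proof.
  unfold mix. pose proof (phi_pos (S t) i l).
  rewrite (fsum_ext N _ (fun j => / phi (S t) i l * (if inNil E ell t i l j then a t l i j * phi t j l else 0))).
  - rewrite fsum_scal, <- Hphi. field. lra.
  - intros j. destruct inNil; [field|ring]. lra.
Qed.

Lemma mix_lower_bound l pm t i j : 0 < pm -> (forall t i, pm <= phi t i l) ->
  inEl E ell t l i j = true -> kappa * pm / INR N <= mix t l i j.
Proof.
  intros Hpm0 Hpm H. unfold mix.
  assert (Hn : inNil E ell t i l j = true) by (unfold inEl in H; apply andb_prop in H; tauto).
  rewrite Hn. pose proof (Ha1 _ _ _ _ H). pose proof (Hpm t j). pose proof (phi_le_N (S t) i l).
  pose proof (phi_pos (S t) i l). pose proof (lt_0_INR N ltac:(lia)).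
  unfold Rdiv. apply Rle_trans with (a t l i j * phi t j l * / INR N).
  - apply Rmult_le_compat_r; [left; apply Rinv_0_lt_compat; auto|]. apply Rmult_le_compat; lra.
  - apply Rmult_le_compat_l; [pose proof (weight_nonneg t l i j); nra|]. apply Rinv_le_contravar; auto.
Qed.

Lemma mix_uniformly_positive l : exists T eta, 0 < eta <= 1 /\
  (forall j i, E j i = true -> forall s, exists k, (k < T)%nat /\ act l (s + k)%nat j i) /\
  (forall s i, eta <= mix s l i i) /\ (forall s j i, act l s j i -> eta <= mix s l i j).
Proof.
  destruct (phi_lower_bound l) as [pm [Hpm Hpm2]]. destruct (act_recurrent l) as [T Hact].
  exists T, (kappa * pm / INR N). repeat split; auto.
  - pose proof (lt_0_INR N ltac:(lia)). apply Rdiv_lt_0_compat; nra.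
  - pose proof kappa_lt_1. pose proof (phi_le_N O node0 l). pose proof (Hpm2 O node0).
    pose proof (lt_0_INR N ltac:(lia)).
    apply Rmult_le_reg_r with (INR N); auto. unfold Rdiv. rewrite Rmult_assoc, Rinv_l by lra. nra.
  - intros s i. apply mix_lower_bound; auto. unfold inEl. now rewrite HEself, inNil_self.
  - intros s j i Ha. apply mix_lower_bound; auto. now apply act_inEl.
Qed.

Section MixedSequence.
Variables (l : Fin B) (v p : nat -> Fin N -> R) (pi : nat -> R).
Hypotheses (Hrec : forall s i, v (S s) i = fsum N (fun j => mix s l i j * (v s j + p s j)))
  (Hp : forall s j, Rabs (p s j) <= pi s).

Lemma mix_spread_cv0 : Un_cv pi 0 -> Un_cv (fun t => spread (v t)) 0.
Proof.
  destruct (mix_uniformly_positive l) as [T [eta [Heta [Hact [Hself Hedge]]]]].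
  apply (averaging_spread_cv0 N (fun s => mix s l) v p pi HN (fun s => mix_nonneg s l) (fun s => mix_sum s l)
           Hrec Hp T E (act l) eta); auto.
Qed.

Lemma mix_spread_bounded beta : (forall s, pi s <= beta) -> 0 <= beta -> exists C, forall t, spread (v t) <= C.
Proof.
  destruct (mix_uniformly_positive l) as [T [eta [Heta [Hact [Hself Hedge]]]]].
  apply (averaging_spread_bounded N (fun s => mix s l) v p pi HN (fun s => mix_nonneg s l) (fun s => mix_sum s l)
           Hrec Hp T E (act l) eta); auto.
Qed.

Lemma mix_step s i : Rabs (v (S s) i - v s i) <= spread (v s) + pi s.
Proof.
  apply (averaging_step N (fun s => mix s l) v p pi HN (fun s => mix_nonneg s l) (fun s => mix_sum s l) Hrec Hp).
Qed.
End MixedSequence.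

Lemma x_rec t i l k :
  x (S t) i l k = fsum N (fun j => mix t l i j * (x t j l k + gamma t * DeltaX ell x xt t j l k)).
Proof. rewrite Hx. apply fsum_ext. intros j. unfold mix. destruct inNil; unfold bscal, badd, bzero; ring. Qed.

Definition grad_incr (t : nat) (j : Fin N) (l : Fin B) (k : Fin d) : R :=
  gf j (x (S t) j) l k - gf j (x t j) l k.

Lemma y_rec t i l k :
  y (S t) i l k = fsum N (fun j => mix t l i j * (y t j l k + grad_incr t j l k / phi t j l)).
Proof.
  rewrite Hy. apply fsum_ext. intros j. unfold mix, grad_incr.
  destruct inNil; unfold bscal, badd, bsub, bzero; [|ring].
  pose proof (phi_pos t j l). pose proof (phi_pos (S t) i l). field. lra.
Qed.

Lemma y_tracking : forall t l k, fsum N (fun i => phi t i l * y t i l k) = fsum N (fun j => gf j (x t j) l k).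
Proof.
  induction t as [|t IH]; intros l k.
  - apply fsum_ext. intros i. rewrite Hphi0, Hy0. ring.
  - rewrite (fsum_ext N _ (fun i => fsum N (fun j => a t l i j * (phi t j l * y t j l k + grad_incr t j l k)))).
    + rewrite fsum_comm, (fsum_ext N _ (fun j => phi t j l * y t j l k + grad_incr t j l k)).
      * rewrite fsum_add, IH, <- fsum_add. apply fsum_ext. intros j. unfold grad_incr. ring.
      * intros j. rewrite (fsum_ext N _ (fun i => (phi t j l * y t j l k + grad_incr t j l k) * a t l i j))
          by (intros; ring). rewrite fsum_scal, Ha3. ring.
    + intros i. rewrite Hy. unfold bsumv. rewrite <- fsum_scal. apply fsum_ext. intros j.
      rewrite <- (weight_if_inNil t l i j). pose proof (phi_pos (S t) i l).
      destruct inNil; unfold bscal, badd, bsub, bzero, grad_incr; [field; lra|ring].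
Qed.

Lemma x_in_K : forall t i, inK K (x t i).
Proof.
  induction t as [|t IH]; intros i l; [apply Hx0|].
  replace (x (S t) i l)
    with (fun k => fsum N (fun j => mix t l i j * badd (x t j l) (bscal (gamma t) (DeltaX ell x xt t j l)) k))
    by (apply functional_extensionality; intros k; rewrite x_rec; reflexivity).
  apply convex_fsum; auto using mix_nonneg, mix_sum. intros j. unfold DeltaX.
  destruct (fin_eqb l (ell t j)) eqn:El.
  - apply fin_eqb_true in El. subst l.
    replace (badd (x t j (ell t j)) (bscal (gamma t) (bsub (xt t j) (x t j (ell t j)))))
      with (badd (bscal (gamma t) (xt t j)) (bscal (1 - gamma t) (x t j (ell t j))))
      by (apply functional_extensionality; intros k; unfold badd, bscal, bsub; ring).
    apply Kconv; [apply (proj1 (Harg t j))|apply IH|specialize (Hg1 t); lra].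
  - replace (badd (x t j l) (bscal (gamma t) (bzero d))) with (x t j l); [apply IH|].
    apply functional_extensionality; intros k; unfold badd, bscal, bzero; ring.
Qed.

Lemma y_near_average t i l k :
  Rabs (y t i l k - / INR N * fsum N (fun j => gf j (x t j) l k)) <= spread (fun i => y t i l k).
Proof.
  pose proof (lt_0_INR N ltac:(lia)) as HNr.
  rewrite <- y_tracking.
  replace (y t i l k - / INR N * fsum N (fun j => phi t j l * y t j l k))
    with (/ INR N * fsum N (fun j => phi t j l * (y t i l k - y t j l k))).
  2:{ rewrite (fsum_ext N _ (fun j => y t i l k * phi t j l - phi t j l * y t j l k)) by (intros; ring).
      rewrite fsum_sub, fsum_scal, phi_sum. field. lra. }
  rewrite Rabs_mult, Rabs_right by (left; apply Rinv_0_lt_compat; auto).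
  apply Rmult_le_reg_l with (INR N); auto. rewrite <- Rmult_assoc, Rinv_r, Rmult_1_l by lra.
  eapply Rle_trans; [apply fsum_abs|]. rewrite <- (phi_sum t l), Rmult_comm, <- fsum_scal.
  apply fsum_le. intros j. rewrite Rabs_mult, Rabs_right by (left; apply phi_pos).
  rewrite Rmult_comm. apply Rmult_le_compat_r; [left; apply phi_pos|apply (spread_diff (fun i => y t i l k))].
Qed.

Lemma gradients_bounded : exists G0, 0 <= G0 /\ forall j z, inK K z -> fnorm (gf j z) <= G0.
Proof.
  destruct (fin_real_bound N (fun j G0 => forall z, inK K z -> fnorm (gf j z) <= G0)) as [G0 HG0].
  - intros j u v H Huv z Hz. specialize (H z Hz). lra.
  - exact gfB.
  - exists G0. split; auto. pose proof (HG0 node0 _ (Hx0 node0)). pose proof (fnorm_nonneg (gf node0 (x O node0))). lra.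
Qed.

Lemma average_gradient_bounded G0 t l k : (forall j z, inK K z -> fnorm (gf j z) <= G0) ->
  Rabs (/ INR N * fsum N (fun j => gf j (x t j) l k)) <= G0.
Proof.
  intros HG0. pose proof (lt_0_INR N ltac:(lia)).
  rewrite Rabs_mult, Rabs_right by (left; apply Rinv_0_lt_compat; auto).
  apply Rmult_le_reg_l with (INR N); auto. rewrite <- Rmult_assoc, Rinv_r, Rmult_1_l by lra.
  eapply Rle_trans; [apply fsum_abs|]. rewrite <- fsum_const. apply fsum_le. intros j.
  eapply Rle_trans; [apply coord_le_fnorm|apply HG0, x_in_K].
Qed.

Lemma y_coord_bounded l k : exists C, forall t i, Rabs (y t i l k) <= C.
Proof.
  destruct gradients_bounded as [G0 [HG0p HG0]]. destruct (phi_lower_bound l) as [pm [Hpm Hpm2]].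
  destruct (mix_spread_bounded l (fun t i => y t i l k) (fun s j => grad_incr s j l k / phi s j l)
              (fun _ => 2 * G0 / pm) (fun s i => y_rec s i l k)) with (beta := 2 * G0 / pm)
    as [C HC].
  - intros s j. unfold Rdiv.
    rewrite Rabs_mult, (Rabs_right (/ phi s j l)) by (left; apply Rinv_0_lt_compat, phi_pos).
    apply Rmult_le_compat; [apply Rabs_pos|left; apply Rinv_0_lt_compat, phi_pos| |apply Rinv_le_contravar; auto].
    unfold grad_incr. eapply Rle_trans; [apply Rabs_triang|]. rewrite Rabs_Ropp.
    pose proof (coord_le_fnorm (gf j (x (S s) j)) l k). pose proof (coord_le_fnorm (gf j (x s j)) l k).
    pose proof (HG0 j _ (x_in_K (S s) j)). pose proof (HG0 j _ (x_in_K s j)). lra.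
  - intros; lra.
  - apply Rmult_le_pos; [lra|left; apply Rinv_0_lt_compat; auto].
  - exists (G0 + C). intros t i. pose proof (y_near_average t i l k). specialize (HC t).
    pose proof (average_gradient_bounded G0 t l k HG0).
    pose proof (Rabs_triang (y t i l k - / INR N * fsum N (fun j => gf j (x t j) l k))
                            (/ INR N * fsum N (fun j => gf j (x t j) l k))) as Htri.
    rewrite Rplus_comm, Rplus_minus in Htri. lra.
Qed.

Lemma y_bounded : exists Yb, forall l t i, bnorm (y t i l) <= Yb.
Proof.
  apply (fin_real_bound B (fun l Yb => forall t i, bnorm (y t i l) <= Yb)).
  { intros l u v H Huv t i. specialize (H t i). lra. }
  intros l. destruct (fin_real_bound d (fun k C => forall t i, Rabs (y t i l k) <= C)) as [C HC].
  - intros k u v H Huv t i. specialize (H t i). lra.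
  - apply y_coord_bounded.
  - exists (INR d * C). intros t i.
    eapply Rle_trans; [apply bnorm_le_sum_abs|]. rewrite <- fsum_const. apply fsum_le. auto.
Qed.

Lemma subgradients_bounded : exists Ms, 0 <= Ms /\ forall l z g, K l z -> IsSubgrad (r l) z g -> bnorm g <= Ms.
Proof.
  destruct (fin_real_bound B (fun l Ms => forall z g, K l z -> IsSubgrad (r l) z g -> bnorm g <= Ms))
    as [Ms HMs].
  - intros l u v H Huv z g Hz Hg. specialize (H z g Hz Hg). lra.
  - exact rsub.
  - exists Ms. split; auto. set (l := ell O node0).
    destruct (subgradient_exists d (r l) (x O node0 l) (rconv l)) as [g Hg].
    pose proof (HMs l _ _ (x_in_K O node0 l) Hg). pose proof (bnorm_nonneg g). lra.
Qed.

Lemma step_bounded : exists Db, 0 <= Db /\ forall t j, bnorm (bsub (xt t j) (x t j (ell t j))) <= Db.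
Proof.
  destruct y_bounded as [Yb HYb]. destruct subgradients_bounded as [Ms [HMs0 HMs]].
  set (Cst := INR N * Yb + Ms).
  destruct (fin_real_bound N (fun j c => 2 * Cst / tau j <= c)) as [Tb HTb].
  { intros j u v H1 H2. lra. } { intros j. exists (2 * Cst / tau j). lra. }
  exists (Rmax Tb 0). split; [apply Rmax_r|]. intros t j.
  set (l := ell t j). set (X := x t j). set (u := X l).
  destruct (Harg t j) as [Hz Hmin].
  destruct (subgradient_exists d (r l) u (rconv l)) as [sg Hsg].
  assert (Hu : K l u) by apply x_in_K.
  pose proof (argmin_near_anchor d (K l) (fun z => ft j l z X) (fun z => gft j l z X) (r l) (tau j)
                (Htau j) (Hsc j l X (x_in_K t j)) _ u (xt t j) sg Hz Hu Hsg Hmin) as Hnear.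
  cbv beta in Hnear. fold l X in Hnear.
  (* at the anchor u = x_l the surrogate gradient is the local gradient, which cancels *)
  replace (badd (bsub (bscal (INR N) (y t j l)) (gf j X l)) (gft j l u X)) with (bscal (INR N) (y t j l)) in Hnear
    by (unfold u; rewrite Hgrad by apply x_in_K; apply functional_extensionality; intros k;
        unfold badd, bsub, bscal; ring).
  rewrite bnorm_scal, Rabs_right in Hnear by (apply Rle_ge, pos_INR).
  pose proof (HMs l u sg Hu Hsg). pose proof (HYb l t j). pose proof (pos_INR N).
  pose proof (Htau j). pose proof (HTb j). pose proof (Rmax_l Tb 0).
  assert (2 * (INR N * bnorm (y t j l) + bnorm sg) / tau j <= 2 * Cst / tau j).
  { unfold Rdiv. apply Rmult_le_compat_r; [left; apply Rinv_0_lt_compat; auto|]. unfold Cst. nra. }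
  lra.
Qed.

Lemma DeltaX_bounded : exists Db, 0 <= Db /\ forall s j l k, Rabs (DeltaX ell x xt s j l k) <= Db.
Proof.
  destruct step_bounded as [Db [HDb HD]]. exists Db. split; auto. intros s j l k. unfold DeltaX.
  destruct (fin_eqb l (ell s j)) eqn:El.
  - apply fin_eqb_true in El. subst l. eapply Rle_trans; [apply coord_le_bnorm|apply HD].
  - unfold bzero. rewrite Rabs_R0. auto.
Qed.

Lemma x_perturbation_bound Db s j l k : (forall s j l k, Rabs (DeltaX ell x xt s j l k) <= Db) ->
  Rabs (gamma s * DeltaX ell x xt s j l k) <= Db * gamma s.
Proof.
  intros HD. rewrite Rabs_mult, Rabs_right by (left; apply Hg1).
  rewrite Rmult_comm. apply Rmult_le_compat_r; [left; apply Hg1|auto].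
Qed.

Lemma x_consensus l k : Un_cv (fun t => spread (fun i => x t i l k)) 0.
Proof.
  destruct DeltaX_bounded as [Db [_ HD]].
  apply (mix_spread_cv0 l (fun t i => x t i l k) (fun s j => gamma s * DeltaX ell x xt s j l k) (fun s => Db * gamma s)).
  - intros s i. apply x_rec.
  - intros s j. now apply x_perturbation_bound.
  - now apply Un_cv0_scal.
Qed.

Lemma x_increment_cv0 j : Un_cv (fun t => fnorm (fsub (x (S t) j) (x t j))) 0.
Proof.
  destruct DeltaX_bounded as [Db [_ HD]]. apply fnorm_Un_cv0. intros l k.
  apply (Un_cv0_le _ (fun t => spread (fun i => x t i l k) + Db * gamma t)).
  - intros t. apply (mix_step l (fun t i => x t i l k) (fun s j => gamma s * DeltaX ell x xt s j l k)
                       (fun s => Db * gamma s)).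
    + intros s i. apply x_rec.
    + intros s j'. now apply x_perturbation_bound.
  - apply Un_cv0_plus; [apply x_consensus|now apply Un_cv0_scal].
Qed.

Lemma grad_incr_cv0 j l k : Un_cv (fun t => grad_incr t j l k) 0.
Proof.
  apply (Un_cv0_le _ (fun t => Rabs (L j) * fnorm (fsub (x (S t) j) (x t j)))).
  - intros t. unfold grad_incr.
    eapply Rle_trans; [apply (coord_le_fnorm (fsub (gf j (x (S t) j)) (gf j (x t j))))|].
    eapply Rle_trans; [apply gfL; apply x_in_K|].
    apply Rmult_le_compat_r; [apply fnorm_nonneg|apply Rle_abs].
  - apply Un_cv0_scal, x_increment_cv0.
Qed.

Lemma y_consensus l k : Un_cv (fun t => spread (fun i => y t i l k)) 0.
Proof.
  destruct (phi_lower_bound l) as [pm [Hpm Hpm2]].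
  apply (mix_spread_cv0 l (fun t i => y t i l k) (fun s j => grad_incr s j l k / phi s j l)
           (fun s => / pm * fsum N (fun j => Rabs (grad_incr s j l k)))).
  - intros s i. apply y_rec.
  - intros s j. unfold Rdiv.
    rewrite Rabs_mult, (Rabs_right (/ phi s j l)) by (left; apply Rinv_0_lt_compat, phi_pos).
    rewrite Rmult_comm. apply Rmult_le_compat.
    + left; apply Rinv_0_lt_compat, phi_pos.
    + apply Rabs_pos.
    + apply Rinv_le_contravar; auto.
    + apply (fsum_term_le N (fun j => Rabs (grad_incr s j l k))). intros; apply Rabs_pos.
  - apply Un_cv0_scal, (Un_cv0_fsum N (fun j t => Rabs (grad_incr t j l k))). intros j.
    apply Un_cv0_abs, grad_incr_cv0.
Qed.

Lemma x_disagreement_cv0 i j : Un_cv (fun t => fnorm (fsub (x t i) (x t j))) 0.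
Proof.
  apply fnorm_Un_cv0. intros l k. apply (Un_cv0_le _ (fun t => spread (fun i => x t i l k))).
  - intros t. apply (spread_diff (fun i => x t i l k)).
  - apply x_consensus.
Qed.

Lemma tracking_error_cv0 i l k :
  Un_cv (fun t => fsum N (fun j => gf j (x t i) l k) - INR N * y t i l k) 0.
Proof.
  pose proof (lt_0_INR N ltac:(lia)) as HNr.
  apply (Un_cv0_le _ (fun t => fsum N (fun j => Rabs (L j) * fnorm (fsub (x t i) (x t j)))
                              + INR N * spread (fun i => y t i l k))).
  - intros t.
    replace (fsum N (fun j => gf j (x t i) l k) - INR N * y t i l k)
      with (fsum N (fun j => gf j (x t i) l k - gf j (x t j) l k)
            - INR N * (y t i l k - / INR N * fsum N (fun j => gf j (x t j) l k)))
      by (rewrite fsum_sub; field; lra).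
    unfold Rminus at 1. eapply Rle_trans; [apply Rabs_triang|]. apply Rplus_le_compat.
    + eapply Rle_trans; [apply fsum_abs|]. apply fsum_le. intros j.
      eapply Rle_trans; [apply (coord_le_fnorm (fsub (gf j (x t i)) (gf j (x t j))))|].
      eapply Rle_trans; [apply gfL; apply x_in_K|].
      apply Rmult_le_compat_r; [apply fnorm_nonneg|apply Rle_abs].
    + rewrite Rabs_Ropp, Rabs_mult, Rabs_right by lra.
      apply Rmult_le_compat_l; [lra|apply y_near_average].
  - apply Un_cv0_plus.
    + apply (Un_cv0_fsum N (fun j t => Rabs (L j) * fnorm (fsub (x t i) (x t j)))). intros j.
      apply Un_cv0_scal, x_disagreement_cv0.
    + apply Un_cv0_scal, y_consensus.
Qed.

Lemma best_response_gap_cv0 i xhat :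
  (forall t, IsArgmin (K (ell t i)) (BRobj gf ft r i (ell t i) (x t i)) (xhat t)) ->
  Un_cv (fun t => bnorm (bsub (xhat t) (xt t i))) 0.
Proof.
  intros Hxh. set (err := fun t l k => fsum N (fun j => gf j (x t i) l k) - INR N * y t i l k).
  apply (Un_cv0_le _ (fun t => / tau i * fnorm (err t))).
  - intros t. rewrite Rabs_right by (apply Rle_ge, bnorm_nonneg).
    set (l := ell t i). set (X := x t i).
    destruct (Hxh t) as [Hz1 Hmin1]. destruct (Harg t i) as [Hz2 Hmin2].
    pose proof (argmin_lipschitz_in_linear_term d (K l) (fun z => ft i l z X) (fun z => gft i l z X) (r l) (tau i)
                  (Kconv l) (rconv l) (Htau i) (Hsc i l X (x_in_K t i)) _ _ (X l) _ _ Hz1 Hz2 Hmin1 Hmin2) as H.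
    eapply Rle_trans; [exact H|]. unfold Rdiv. rewrite Rmult_comm.
    apply Rmult_le_compat_l; [left; apply Rinv_0_lt_compat, Htau|].
    (* the two linear terms differ by exactly the tracking error on block l *)
    replace (bsub _ _) with (err t l); [apply bnorm_le_fnorm|].
    apply functional_extensionality; intros k. unfold err, bsub, bscal, bsumv, l.
    pose proof (lt_0_INR N ltac:(lia)). field. lra.
  - apply Un_cv0_scal, fnorm_Un_cv0. intros l k. apply tracking_error_cv0.
Qed.
End Algorithm.

Theorem mainTheorem9
  (N B d : nat) (HN : (1 <= N)%nat) (HB : (1 <= B)%nat) (Hd : (1 <= d)%nat)
  (K : Fin B -> Blk d -> Prop)
  (f : Fin N -> Full B d -> R) (gf : Fin N -> Full B d -> Full B d) (L : Fin N -> R)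
  (r : Fin B -> Blk d -> R)
  (HP : ProblemAssumptions K f gf L r)
  (E : Fin N -> Fin N -> bool) (HE : NetworkAssumptions E)
  (ell : nat -> Fin N -> Fin B) (Hell : BlockSelection ell)
  (kappa : R) (Hkappa : 0 < kappa)
  (a : nat -> Fin B -> Fin N -> Fin N -> R) (Ha : WeightAssumptions E ell kappa a)
  (ft : Fin N -> Fin B -> Blk d -> Full B d -> R)
  (gft : Fin N -> Fin B -> Blk d -> Full B d -> Blk d) (tau : Fin N -> R)
  (Hsur : SurrogateAssumptions K gf ft gft tau)
  (gamma : nat -> R) (Hgamma : StepSizes gamma)
  (x y : nat -> Fin N -> Full B d) (phi : nat -> Fin N -> Fin B -> R)
  (xt : nat -> Fin N -> Blk d)
  (Hrun : AlgorithmRun K gf r ft E ell a gamma x y phi xt) :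
  forall (i : Fin N) (xhat : nat -> Blk d),
    (forall t, IsArgmin (K (ell t i)) (BRobj gf ft r i (ell t i) (x t i)) (xhat t)) ->
    Un_cv (fun t => bnorm (bsub (xhat t) (xt t i))) 0.
Proof.
  destruct HP as [HK [Hf [Hr _]]]. destruct HE as [HEself HEconn].
  destruct Ha as [Ha1 [Ha2 Ha3]]. destruct Hsur as [Htau [_ [Hsc [Hgrad _]]]].
  destruct Hgamma as [Hg1 [_ [_ Hsq]]].
  destruct Hrun as [Hx0 [Hy0 [Hphi0 [Harg [Hphi [Hx Hy]]]]]].
  intros i xhat Hxh.
  eapply best_response_gap_cv0; eauto.
  - intros l. apply HK.
  - intros j. apply Hf.
  - intros j. apply Hf.
  - intros l. apply Hr.
  - intros l. apply Hr.
  - now apply Un_cv0_of_sum_sq_cv.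
Qed.
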